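(* Let $G$ be a group with a conjugation-closed generating set $X$ and let $g\in\mathrm{Mon}(X)$. In the circular topological poset $\mathcal F(G,g,\mathbf S)$, the subspace of maximal elements is homeomorphic to the interval complex $K_g$.
   Context: $\mathrm{Mon}(X)$ is the submonoid of $G$ generated by $X$; for $h\in\mathrm{Mon}(X)$, $\ell(h)$ is the minimal length of a product of elements of $X$ equal to $h$. For $h,g\in\mathrm{Mon}(X)$ write $h\le g$ if there is $h'\in\mathrm{Mon}(X)$ with $hh'=g$ and $\ell(h)+\ell(h')=\ell(g)$; $P_g=[1,g]=\{h:h\le g\}$ is a bounded graded poset of height $\ell(g)$. Order complex and interval complex: $O_g$ is the order complex of $[1,g]$ (a $k$-simplex, with ordered vertices, for each chain $x_0<\cdots<x_k$), metrized so that each maximal simplex (maximal chain $x_0<\cdots<x_n$, $n=\ell(g)$) is the standard orthoscheme $\{0\le y_1\le\cdots\le y_n\le1\}\subset\mathbb R^n$ with $x_i$ at the vertex whose last $i$ coordinates are $1$ and others $0$. $K_g$ is the quotient of $O_g$ obtained by identifying (via the order-preserving affine map) the simplices of chains $x_0<\cdots<x_k$ and $y_0<\cdots<y_k$ whenever $x_{i-1}^{-1}x_i=y_{i-1}^{-1}y_i$ for all $1\le i\le k$. Linear factorizations: a linear factorization of $h\in\mathrm{Mon}(X)$ is a vector $[x_L\ x_1\cdots x_k\ x_R]$ ($k\ge0$) of elements of $\mathrm{Mon}(X)$ with $x_1,\dots,x_k\ne1$, $\ell(x_L)+\sum\ell(x_i)+\ell(x_R)=\ell(h)$, $x_Lx_1\cdots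 x_kx_R=h$. A $G$-multiset on a set $S$ is a function $S\to G$ trivial at all but finitely many points. A weighted linear factorization of $h$ is a $G$-multiset $\mathbf u$ on $\mathbf I=[0,1]$ such that, with $0<s_1<\dots<s_k<1$ the points of $(0,1)$ where $\mathbf u$ is nontrivial, $P(\mathbf u)=[\mathbf u(0)\ \mathbf u(s_1)\cdots\mathbf u(s_k)\ \mathbf u(1)]$ is a linear factorization of $h$; write $\mathbf u=0^{x_L}s_1^{x_1}\cdots s_k^{x_k}1^{x_R}$. $\mathrm{WFact}(G,h,\mathbf I)$ is the set of these, topologized as follows: with $n=\ell(h)$, identify the weighted linear factorizations of $n$ in $(\mathbb Z,\{1\})$, $0^{a_L}s_1^{a_1}\cdots1^{a_R}$, with the points of $\{0\le y_1\le\cdots\le y_n\le1\}\subset\mathbb R^n$ obtained by listing the multiset ($a_L$ zeros, $a_i$ copies of $s_i$, $a_R$ ones) in nondecreasing order; the map $\mathbf u\mapsto\ell\circ\mathbf u$ is a bijection from each set $\{\mathbf u:P(\mathbf u)=\mathbf x\}$ onto an open face of this orthoscheme, and pulling back the Euclidean metric on these cells gives $\mathrm{WFact}(G,h,\mathbf I)$ the structure of a piecewise-Euclidean complex. Topological posets: $\mathcal F(G,g,\mathbf I)$ is the topological disjoint union $\bigsqcup_{h\in[1,g]}\mathrm{WFact}(G,h,\mathbf I)$, ordered by $\mathbf v\subseteq\mathbf u$ iff $\mathbf v(r)\le\mathbf u(r)$ for all $r\in\mathbf I$. Two elements $0^{x_L}s_1^{x_1}\cdots s_k^{x_k}1^{x_R}$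 and $0^{y_L}s_1^{y_1}\cdots s_k^{y_k}1^{y_R}$ are equivalent if $x_i=y_i$ for $1\le i\le k$ and $gx_Rg^{-1}x_L=gy_Rg^{-1}y_L$; $\mathcal F(G,g,\mathbf S)$ is the set of equivalence classes with the quotient topology and the order $[\mathbf v]\le[\mathbf u]$ iff $\mathbf v'\subseteq\mathbf u'$ for some representatives. *)

From Stdlib Require Import Reals List Arith Lia Sorting.Sorted.
Import ListNotations.
Set Implicit Arguments.
Open Scope R_scope.

Record Group := {
  gcar :> Type;
  gmul : gcar -> gcar -> gcar;
  gone : gcar;
  ginv : gcar -> gcar;
  gmulA : forall a b c, gmul a (gmul b c) = gmul (gmul a b) c;
  gmul1 : forall a, gmul gone a = a;
  gmulV : forall a, gmul (ginv a) a = gone }.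

Section Defs.
Variable G : Group.
Variable X : G -> Prop.

Local Notation "a *g b" := (gmul G a b) (at level 40, left associativity).
Local Notation one := (gone G).

Definition prodl (l : list G) : G := fold_right (gmul G) one l.

Definition conj_closed : Prop :=
  forall x z : G, X x -> X (z *g x *g ginv G z).
Definition generates : Prop :=
  forall z : G, exists l : list (bool * G),
    Forall (fun p : bool * G => X (snd p)) l /\
    prodl (map (fun p : bool * G => if fst p then snd p else ginv G (snd p)) l) = z.

Definition word (w : list G) : Prop := Forall X w.

Definition Mon (h : G) : Prop := exists w, word w /\ prodl w = h.
Definition ell (h : G) (n : nat) : Prop :=
  (exists w, word w /\ prodl w = h /\ length w = n) /\
  (forall w, word w -> prodl w = h -> (n <= length w)%nat).

Definition le (h g : G) : Prop :=
  Mon h /\ exists h', Mon h' /\ h *g h' = g /\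
    exists a b c, ell h a /\ ell h' b /\ ell g c /\ (a + b = c)%nat.
Definition lt (h g : G) : Prop := le h g /\ h <> g.

Definition reduced (h : G) (w : list G) : Prop :=
  word w /\ prodl w = h /\ ell h (length w).

Definition linfact (h xL : G) (xs : list G) (xR : G) : Prop :=
  Forall Mon (xL :: xs ++ [xR]) /\ Forall (fun x => x <> one) xs /\
  (exists ns : list nat, Forall2 ell (xL :: xs ++ [xR]) ns /\
      ell h (list_sum ns)) /\
  prodl (xL :: xs ++ [xR]) = h.

(** weighted linear factorizations: G-multisets u on I = [0,1]
    (encoded as functions R -> G that are trivial outside [0,1]) *)
Definition wfact (h : G) (u : R -> G) : Prop :=
  (forall r, ~ (0 <= r <= 1) -> u r = one) /\
  exists s : list R,
    Sorted Rlt s /\ Forall (fun r => 0 < r < 1) s /\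
    (forall r, 0 < r < 1 -> (u r <> one <-> In r s)) /\
    linfact h (u 0) (map u s) (u 1).

(** the standard orthoscheme {0 <= y_1 <= ... <= y_n <= 1}, coordinates
    indexed 1..n *)
Definition inDelta (n : nat) (y : nat -> R) : Prop :=
  (forall j, (1 <= j <= n)%nat -> 0 <= y j <= 1) /\
  (forall j, (1 <= j < n)%nat -> y j <= y (S j)).

Definition cellopen (n : nat) (P : (nat -> R) -> Prop) : Prop :=
  forall y, inDelta n y -> P y ->
    exists eps, 0 < eps /\
      forall z, inDelta n z ->
        (forall j, (1 <= j <= n)%nat -> Rabs (z j - y j) < eps) -> P z.

(** characteristic map of the (maximal) cell of WFact(G,h,I) given by
    a reduced word w of h: the j-th letter sits at position y_j *)
Definition Phi (w : list G) (y : nat -> R) : R -> G := fun r =>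
  prodl (map (fun j => nth (j - 1) w one)
     (filter (fun j => if Req_EM_T (y j) r then true else false)
             (seq 1 (length w)))).

Variable g : G.

(** points of F(G,g,I) = disjoint union over h in [1,g] of WFact(G,h,I) *)
Definition inF (p : G * (R -> G)) : Prop :=
  le one (fst p) /\ le (fst p) g /\ wfact (fst p) (snd p).

Definition equivF (p q : G * (R -> G)) : Prop :=
  (forall r, 0 < r < 1 -> snd p r = snd q r) /\
  g *g snd p 1 *g ginv G g *g snd p 0 = g *g snd q 1 *g ginv G g *g snd q 0.

(** points of F(G,g,S) : equivalence classes *)
Definition FSpt : Type :=
  { A : G * (R -> G) -> Prop |
      exists p, inF p /\ A = (fun q => inF q /\ equivF p q) }.

(** quotient topology (of the disjoint union of the weak topologies
    of the complexes WFact(G,h,I)) *)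
Definition FSopen (V : FSpt -> Prop) : Prop :=
  forall h w, le one h -> le h g -> reduced h w ->
    cellopen (length w)
      (fun y => exists A : FSpt, V A /\ proj1_sig A (h, Phi w y)).

Definition subF (p q : G * (R -> G)) : Prop :=
  forall r, 0 <= r <= 1 -> le (snd p r) (snd q r).

Definition leFS (A B : FSpt) : Prop :=
  exists p q, proj1_sig A p /\ proj1_sig B q /\ subF p q.

Definition maximalFS (A : FSpt) : Prop :=
  forall B : FSpt, leFS A B -> B = A.

Definition MaxPt : Type := { A : FSpt | maximalFS A }.

Definition MaxOpen (U : MaxPt -> Prop) : Prop :=
  exists V, FSopen V /\ forall a : MaxPt, U a <-> V (proj1_sig a).

Definition maxchain (n : nat) (c : list G) : Prop :=
  length c = S n /\ nth 0 c one = one /\ nth n c one = g /\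
  (forall i, (i <= n)%nat -> le one (nth i c one) /\ le (nth i c one) g) /\
  (forall i, (i < n)%nat -> lt (nth i c one) (nth (S i) c one)).

(** barycentric weight of vertex x_i (placed at the point whose last i
    coordinates are 1) at the point y of the orthoscheme *)
Definition yext (n : nat) (y : nat -> R) (j : nat) : R :=
  if Nat.eqb j 0 then 0 else if Nat.eqb j (S n) then 1 else y j.
Definition bary (n : nat) (y : nat -> R) (i : nat) : R :=
  yext n y (S n - i) - yext n y (n - i).

Definition supp (n : nat) (y : nat -> R) : list nat :=
  filter (fun i => if Rlt_dec 0 (bary n y i) then true else false)
         (seq 0 (S n)).

Fixpoint incs (c : list G) (idx : list nat) : list G :=
  match idx with
  | i :: ((j :: _) as rest) =>
      (ginv G (nth i c one) *g nth j c one) :: incs c rest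
  | _ => []
  end.

(** A point of O_g lies in the interior of the simplex of its support
    chain; K_g identifies two points iff these support chains have the
    same successive increments x_{i-1}^{-1} x_i and the points have the
    same barycentric coordinates.  [Dsc] computes this datum. *)
Definition Dsc (n : nat) (c : list G) (y : nat -> R) : list R * list G :=
  (map (bary n y) (supp n y), incs c (supp n y)).

Definition Kpt : Type :=
  { d : list R * list G |
      exists n c y, ell g n /\ maxchain n c /\ inDelta n y /\ Dsc n c y = d }.

(** quotient of the weak topology of O_g (glued from its maximal
    orthoschemes) *)
Definition Kopen (V : Kpt -> Prop) : Prop :=
  forall n c, ell g n -> maxchain n c ->
    cellopen n (fun y => exists d : Kpt, V d /\ proj1_sig d = Dsc n c y).

End Defs.

Definition homeomorphic (A B : Type) (openA : (A -> Prop) -> Prop)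
  (openB : (B -> Prop) -> Prop) : Prop :=
  exists f : A -> B,
    (exists f' : B -> A, (forall a, f' (f a) = a) /\ (forall b, f (f' b) = b)) /\
    (forall V, openB V -> openA (fun a => V (f a))) /\
    (forall U, openA U -> openB (fun b => exists a, U a /\ f a = b)).

(** A class of weighted factorizations of [h < g] lies strictly below one of [g] (absorb
    [h^-1 g] into the weight at [1]), while classes of factorizations of [g] are maximal
    because refining them cannot lower the total word length.  For factorizations of [g] the circular equivalence only remembers
    the weights in the open interval (0,1).  Spreading the reduced word read off a maximal
    chain [x_0 < ... < x_n] along a point of its orthoscheme gives such a factorization,
    whose interior weights are the increments between consecutive support vertices of the
    point, placed at the partial sums of its barycentric coordinates: this is exactly the
    datum by which K_g identifies points of O_g.  So the cellwise maps descend to a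
    bijection between K_g and the maximal elements, and since both topologies are glued
    from the same cells (up to the flip [y_j |-> 1 - y_(n+1-j)]), it is a homeomorphism. *)

From Pilot Require Import Defs.
From Stdlib Require Import Reals List Lia Lra Sorting.Sorted Permutation Wf_nat.
From Stdlib Require Import Classical ClassicalEpsilon FunctionalExtensionality
  PropExtensionality ProofIrrelevance.
Import ListNotations.
Open Scope R_scope.

Section GroupFacts.
Variable G : Group.
Local Notation "a *g b" := (gmul G a b) (at level 40, left associativity).
Local Notation one := (gone G).
Local Notation inv := (ginv G).

Lemma mulgV (a : G) : a *g inv a = one.
Proof.
  transitivity ((inv (inv a) *g inv a) *g (a *g inv a)).
  - now rewrite gmulV, gmul1.
  - rewrite <- gmulA, (gmulA G (inv a) a), gmulV, gmul1. apply gmulV.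
Qed.

Lemma mulg1 (a : G) : a *g one = a.
Proof. rewrite <- (gmulV G a), gmulA, mulgV. apply gmul1. Qed.

Lemma mulKg (a b : G) : inv a *g (a *g b) = b.
Proof. now rewrite gmulA, gmulV, gmul1. Qed.

Lemma mulKVg (a b : G) : a *g (inv a *g b) = b.
Proof. now rewrite gmulA, mulgV, gmul1. Qed.

Lemma mulgI (a b c : G) : a *g b = a *g c -> b = c.
Proof. intro H. rewrite <- (mulKg a b), <- (mulKg a c). now rewrite H. Qed.

Lemma mulIg (a b c : G) : b *g a = c *g a -> b = c.
Proof.
  intro H. rewrite <- (mulg1 b), <- (mulg1 c), <- (mulgV a), !gmulA. now rewrite H.
Qed.

Lemma invg_unique (a b : G) : a *g b = one -> b = inv a.
Proof. intro H. apply (mulgI a). now rewrite H, mulgV. Qed.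

Lemma invg1 : inv one = one.
Proof. symmetry; apply invg_unique; apply gmul1. Qed.

Lemma divg_eq1 (a b : G) : inv a *g b = one -> a = b.
Proof. intro H. rewrite <- (mulKVg a b), H. now rewrite mulg1. Qed.

(** [g u1 g^-1 u0] is the quantity compared by the circular equivalence; for a
    factorization [u0 m u1] of [g] it only depends on the interior product [m]. *)
Lemma circular_value_top (g u0 m u1 : G) :
  u0 *g (m *g u1) = g -> g *g u1 *g inv g *g u0 = g *g inv m.
Proof.
  intro H. assert (E : u1 = inv m *g (inv u0 *g g)) by (rewrite <- H, !mulKg; reflexivity).
  rewrite E, <- !gmulA, (mulKVg g u0), gmulV, mulg1. reflexivity.
Qed.

Lemma circular_value_eq_top (g h u0 u1 v0 v1 m : G) :
  u0 *g (m *g u1) = g -> v0 *g (m *g v1) = h ->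
  g *g u1 *g inv g *g u0 = g *g v1 *g inv g *g v0 -> h = g.
Proof.
  intros Hu Hv C. rewrite (circular_value_top _ _ _ _ Hu) in C.
  assert (Ev1 : v1 = inv m *g (inv v0 *g h)) by (rewrite <- Hv, !mulKg; reflexivity).
  rewrite Ev1, <- !gmulA in C. apply mulgI in C.
  rewrite <- (mulg1 (inv m)) in C at 1. apply mulgI in C.
  assert (C2 : v0 = h *g inv g *g v0).
  { rewrite <- (mulg1 v0) at 1. rewrite C, <- gmulA. apply mulKVg. }
  rewrite <- (gmul1 G v0) in C2 at 1. apply mulIg in C2.
  apply (mulIg (inv g)). now rewrite mulgV.
Qed.

Lemma mulg_mid_eq1 (a b c d k : G) : a *g b *g c *g d = a *g (b *g k) *g c *g d -> k = one.
Proof.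
  intro H. apply mulIg, mulIg, mulgI in H. rewrite <- (mulg1 b) in H at 1. apply mulgI in H.
  now symmetry.
Qed.

End GroupFacts.

Section WordLength.
Variable G : Group.
Variable X : G -> Prop.
Local Notation "a *g b" := (gmul G a b) (at level 40, left associativity).
Local Notation one := (gone G).
Local Notation inv := (ginv G).
Local Notation ell := (@ell G X).
Local Notation Mon := (@Mon G X).
Local Notation word := (@word G X).
Local Notation prodl := (@prodl G).
Local Notation le := (@le G X).
Local Notation reduced := (@reduced G X).

Lemma prodl_app (l1 l2 : list G) : prodl (l1 ++ l2) = prodl l1 *g prodl l2.
Proof.
  induction l1 as [|a l1 IH]; simpl.
  - now rewrite gmul1.
  - unfold Defs.prodl in *. simpl. rewrite IH. apply gmulA.
Qed.

Lemma prodl_cons (a : G) l : prodl (a :: l) = a *g prodl l.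
Proof. reflexivity. Qed.

Lemma prodl_snoc l x : prodl (l ++ [x]) = prodl l *g x.
Proof. rewrite prodl_app. unfold Defs.prodl at 2; simpl. now rewrite mulg1. Qed.

Lemma prodl_concat (ls : list (list G)) : prodl (concat ls) = prodl (map prodl ls).
Proof. induction ls as [|l ls IH]; simpl; [reflexivity|]. now rewrite prodl_app, IH. Qed.

Lemma prodl_telescope (f : nat -> G) k m :
  prodl (map (fun i => inv (f i) *g f (S i)) (seq k m)) = inv (f k) *g f (k + m)%nat.
Proof.
  revert k; induction m as [|m IH]; intros k.
  - rewrite Nat.add_0_r. symmetry. apply gmulV.
  - cbn [seq map]. rewrite prodl_cons, IH, <- gmulA, mulKVg.
    now replace (S k + m)%nat with (k + S m)%nat by lia.
Qed.

Lemma word_app w1 w2 : word w1 -> word w2 -> word (w1 ++ w2).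
Proof. intros; apply Forall_app; auto. Qed.

Lemma Mon_word w : word w -> Mon (prodl w).
Proof. intro H. now exists w. Qed.

Lemma ell_exists h : Mon h -> exists n, ell h n.
Proof.
  intros [w [Hw Hp]].
  set (P := fun n => exists w, word w /\ prodl w = h /\ length w = n).
  destruct (dec_inh_nat_subset_has_unique_least_element P (fun n => classic (P n)))
    as [n [[Pn Hmin] _]]; [now exists (length w), w|].
  exists n. split; auto. intros w' Hw' Hp'. apply Hmin. now exists w'.
Qed.

Definition wordlen (h : G) : nat := epsilon (inhabits 0%nat) (fun n => ell h n).

Lemma wordlen_spec h : Mon h -> ell h (wordlen h).
Proof. intro H. unfold wordlen. apply epsilon_spec. now apply ell_exists. Qed.

Lemma ell_witness h n : ell h n -> exists w, word w /\ prodl w = h /\ length w = n.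
Proof. now intros [H _]. Qed.

Lemma ell_minimal h n w : ell h n -> word w -> prodl w = h -> (n <= length w)%nat.
Proof. intros [_ M] Hw Hp. now apply M. Qed.

Lemma ell_Mon h n : ell h n -> Mon h.
Proof. intros [[w [Hw [Hp _]]] _]. now exists w. Qed.

Lemma ell_unique h a b : ell h a -> ell h b -> a = b.
Proof.
  intros Ha Hb.
  destruct (ell_witness _ _ Ha) as [wa [Wa [Pa La]]].
  destruct (ell_witness _ _ Hb) as [wb [Wb [Pb Lb]]].
  pose proof (ell_minimal _ _ _ Ha Wb Pb). pose proof (ell_minimal _ _ _ Hb Wa Pa). lia.
Qed.

Lemma wordlen_eq h n : ell h n -> wordlen h = n.
Proof. intro H. apply (ell_unique h); [apply wordlen_spec; eapply ell_Mon|]; eauto. Qed.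

Lemma wordlen_witness h : Mon h ->
  exists w, word w /\ prodl w = h /\ length w = wordlen h.
Proof. intro H. now apply ell_witness, wordlen_spec. Qed.

Lemma ell_one : ell one 0.
Proof. split; [exists []; repeat split; constructor|intros; lia]. Qed.

Lemma wordlen_one : wordlen one = 0%nat.
Proof. apply wordlen_eq, ell_one. Qed.

Lemma Mon_one : Mon one.
Proof. exists []. split; [constructor|reflexivity]. Qed.

Lemma Mon_mul a b : Mon a -> Mon b -> Mon (a *g b).
Proof.
  intros [wa [Ha Pa]] [wb [Hb Pb]]. exists (wa ++ wb).
  split; [now apply word_app|]. now rewrite prodl_app, Pa, Pb.
Qed.

Lemma Mon_prodl L : Forall Mon L -> Mon (prodl L).
Proof. induction 1; [apply Mon_one|]. rewrite prodl_cons. now apply Mon_mul. Qed.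

Lemma wordlen_eq0 h : Mon h -> wordlen h = 0%nat -> h = one.
Proof.
  intros M E. destruct (wordlen_witness h M) as [w [_ [Hp Hl]]].
  destruct w; [now rewrite <- Hp|]. rewrite E in Hl. discriminate.
Qed.

Lemma wordlen_word_le w : word w -> (wordlen (prodl w) <= length w)%nat.
Proof. intro H. eapply ell_minimal; eauto. apply wordlen_spec. now apply Mon_word. Qed.

Lemma wordlen_prodl_le L : Forall Mon L ->
  (wordlen (prodl L) <= list_sum (map wordlen L))%nat.
Proof.
  induction 1 as [|a L Ha HL IH]; [change (prodl []) with one; now rewrite wordlen_one|].
  destruct (wordlen_witness a Ha) as [wa [A1 [A2 A3]]].
  destruct (wordlen_witness _ (Mon_prodl L HL)) as [wL [B1 [B2 B3]]].
  assert (Hw := wordlen_word_le (wa ++ wL) (word_app _ _ A1 B1)).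
  rewrite prodl_app, A2, B2, length_app in Hw. simpl. lia.
Qed.

Lemma wordlen_mul_le a b : Mon a -> Mon b -> (wordlen (a *g b) <= wordlen a + wordlen b)%nat.
Proof.
  intros Ha Hb. pose proof (wordlen_prodl_le [a; b]) as H. simpl in H.
  unfold Defs.prodl in H; simpl in H. rewrite mulg1, Nat.add_0_r in H. apply H. repeat constructor; auto.
Qed.

Lemma Forall2_ell_wordlen L ns : Forall2 ell L ns -> ns = map wordlen L.
Proof. induction 1; simpl; auto. f_equal; auto. symmetry. now apply wordlen_eq. Qed.

Lemma Forall2_wordlen L : Forall Mon L -> Forall2 ell L (map wordlen L).
Proof. induction 1; simpl; constructor; auto. now apply wordlen_spec. Qed.

Lemma reduced_word h w : reduced h w -> word w.
Proof. now intros [W _]. Qed.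

Lemma reduced_wordlen h w : reduced h w -> wordlen h = length w.
Proof. intros [_ [_ E]]. now apply wordlen_eq. Qed.

Lemma reduced_infix h w1 w2 w3 : reduced h (w1 ++ w2 ++ w3) -> reduced (prodl w2) w2.
Proof.
  intros [W [P E]].
  apply Forall_app in W as [W1 W23]. apply Forall_app in W23 as [W2 W3].
  split; [auto|split; [reflexivity|]].
  destruct (wordlen_witness _ (Mon_word _ W2)) as [w2' [A1 [A2 A3]]].
  assert (Hle : (length (w1 ++ w2 ++ w3) <= length (w1 ++ w2' ++ w3))%nat).
  { eapply ell_minimal; [exact E|repeat apply word_app; auto|].
    now rewrite <- P, !prodl_app, A2. }
  rewrite !length_app in Hle.
  pose proof (wordlen_word_le _ W2).
  replace (length w2) with (wordlen (prodl w2)) by lia. apply wordlen_spec, Mon_word, W2.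
Qed.

Lemma reduced_in_concat h ws w : reduced h (concat ws) -> In w ws -> reduced (prodl w) w.
Proof.
  intros R Hw. apply in_split in Hw as [pre [post ->]].
  rewrite concat_app in R. cbn [concat] in R. eapply reduced_infix, R.
Qed.

Lemma le_refl h : Mon h -> le h h.
Proof.
  intro M. split; auto. exists one. split; [apply Mon_one|]. split; [apply mulg1|].
  exists (wordlen h), 0%nat, (wordlen h).
  repeat split; try apply wordlen_spec; auto; [apply ell_one|lia].
Qed.

Lemma le_one_l h : Mon h -> le one h.
Proof.
  intro M. split; [apply Mon_one|]. exists h. split; auto. split; [apply gmul1|].
  exists 0%nat, (wordlen h), (wordlen h).
  repeat split; try apply wordlen_spec; auto; [apply ell_one|lia].
Qed.

Lemma le_Mon_r h k : le h k -> Mon k.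
Proof. intros [M [h' [M' [E _]]]]. rewrite <- E. now apply Mon_mul. Qed.

Lemma le_additive h k : le h k ->
  Mon (inv h *g k) /\ wordlen k = (wordlen h + wordlen (inv h *g k))%nat.
Proof.
  intros [M [h' [M' [E [a [b [c [Ha [Hb [Hc Habc]]]]]]]]]].
  replace h' with (inv h *g k) in * by (rewrite <- E; apply mulKg).
  split; auto. rewrite (wordlen_eq _ _ Ha), (wordlen_eq _ _ Hb), (wordlen_eq _ _ Hc). lia.
Qed.

Lemma le_of_additive h k : Mon h -> Mon (inv h *g k) ->
  wordlen k = (wordlen h + wordlen (inv h *g k))%nat -> le h k.
Proof.
  intros M1 M2 E. split; auto. exists (inv h *g k). split; auto. split; [apply mulKVg|].
  assert (Mk : Mon k) by (rewrite <- (mulKVg G h k); now apply Mon_mul).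
  exists (wordlen h), (wordlen (inv h *g k)), (wordlen k).
  repeat split; try apply wordlen_spec; auto.
Qed.

End WordLength.

Section Descriptors.
Variable G : Group.
Local Notation "a *g b" := (gmul G a b) (at level 40, left associativity).
Local Notation one := (gone G).
Local Notation inv := (ginv G).
Local Notation prodl := (@prodl G).

Definition Rsum (l : list R) : R := fold_right Rplus 0 l.

(** [decode ts as] places the jumps [a_1, a_2, ...] of [as] at the partial sums
    [t_1, t_1 + t_2, ...] of [ts]. *)
Fixpoint decode (ts : list R) (as_ : list G) (r : R) : G :=
  match ts, as_ with
  | t :: ts', a :: as' => if Req_EM_T r t then a else decode ts' as' (r - t)
  | _, _ => one
  end.

Lemma decode_cons t ts a as_ r :
  decode (t :: ts) (a :: as_) r = if Req_EM_T r t then a else decode ts as_ (r - t).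
Proof. reflexivity. Qed.

Definition descriptor (L : R) (ts : list R) (as_ : list G) : Prop :=
  Forall (fun t => 0 < t) ts /\ Rsum ts = L /\ length ts = S (length as_) /\
  Forall (fun a => a <> one) as_.

Lemma Rsum_nonneg ts : Forall (fun t => 0 < t) ts -> 0 <= Rsum ts.
Proof. induction 1; simpl; lra. Qed.

Lemma decode_nonpos ts as_ r : Forall (fun t => 0 < t) ts -> r <= 0 -> decode ts as_ r = one.
Proof.
  intros H; revert as_ r; induction H as [|t ts Ht Hts IH]; intros as_ r Hr; simpl; auto.
  destruct as_ as [|a as_]; auto. destruct (Req_EM_T r t); [lra|]. apply IH. lra.
Qed.

Lemma decode_lt_head t ts as_ r : Forall (fun t => 0 < t) ts -> r < t ->
  decode (t :: ts) as_ r = one.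
Proof.
  intros Hts Hr. destruct as_ as [|a as_]; simpl; auto.
  destruct (Req_EM_T r t); [lra|]. apply decode_nonpos; auto. lra.
Qed.

Lemma descriptor_head L t ts a as_ : descriptor L (t :: ts) (a :: as_) ->
  0 < t < L /\ decode (t :: ts) (a :: as_) t = a /\ a <> one.
Proof.
  intros [P [Hs [Ln N]]]. simpl in Hs, Ln.
  destruct ts as [|t2 ts]; [discriminate|].
  pose proof (Forall_inv P). pose proof (Forall_inv (Forall_inv_tail P)).
  pose proof (Rsum_nonneg _ (Forall_inv_tail (Forall_inv_tail P))). simpl in Hs.
  split; [lra|]. simpl. destruct (Req_EM_T t t); [|congruence].
  split; auto. exact (Forall_inv N).
Qed.

Lemma descriptor_tail L t ts a as_ : descriptor L (t :: ts) (a :: as_) ->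
  descriptor (L - t) ts as_.
Proof.
  intros [P [Hs [Ln N]]]. simpl in Hs, Ln.
  repeat split; [exact (Forall_inv_tail P)|lra|lia|exact (Forall_inv_tail N)].
Qed.

Lemma decode_head_le L t ts a as_ t' ts' a' as' :
  descriptor L (t :: ts) (a :: as_) -> descriptor L (t' :: ts') (a' :: as') ->
  (forall r, 0 < r < L -> decode (t :: ts) (a :: as_) r = decode (t' :: ts') (a' :: as') r) ->
  t <= t'.
Proof.
  intros D D' E. destruct (Rle_lt_dec t t') as [|Hlt]; auto. exfalso.
  destruct (descriptor_head _ _ _ _ _ D') as [Ht' [Dt' Na']].
  destruct D as [P _]. inversion P; subst.
  apply Na'. rewrite <- Dt', <- E by lra. now apply decode_lt_head.
Qed.

Lemma descriptor_nil_contra L t ts a as_ :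
  descriptor L (t :: ts) (a :: as_) -> descriptor L [L] [] ->
  ~ (forall r, 0 < r < L -> decode [L] [] r = decode (t :: ts) (a :: as_) r).
Proof.
  intros D _ E. destruct (descriptor_head _ _ _ _ _ D) as [Ht [Dt Na]].
  apply Na. rewrite <- Dt, <- E by lra. reflexivity.
Qed.

Lemma descriptor_single L ts : descriptor L ts [] -> ts = [L].
Proof.
  intros [_ [Hs [Ln _]]]. destruct ts as [|t [|]]; try discriminate.
  simpl in Hs. f_equal. lra.
Qed.

Lemma decode_inj L ts as_ ts' as' :
  descriptor L ts as_ -> descriptor L ts' as' ->
  (forall r, 0 < r < L -> decode ts as_ r = decode ts' as' r) -> ts = ts' /\ as_ = as'.
Proof.
  revert L ts ts' as'. induction as_ as [|a as_ IH]; intros L ts ts' as' D D' E.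
  - pose proof (descriptor_single _ _ D); subst ts.
    destruct as' as [|a' as'].
    + now rewrite (descriptor_single _ _ D').
    + destruct ts' as [|t' ts']; [destruct D' as [_ [_ [Ln _]]]; discriminate|].
      exfalso. exact (descriptor_nil_contra _ _ _ _ _ D' D E).
  - destruct ts as [|t ts]; [destruct D as [_ [_ [Ln _]]]; discriminate|].
    destruct as' as [|a' as'].
    + pose proof (descriptor_single _ _ D'); subst ts'. exfalso.
      apply (descriptor_nil_contra _ _ _ _ _ D D'). intros r Hr. symmetry. auto.
    + destruct ts' as [|t' ts']; [destruct D' as [_ [_ [Ln _]]]; discriminate|].
      assert (t = t').
      { apply Rle_antisym; eapply decode_head_le; eauto. intros r Hr. symmetry. auto. }
      subst t'.
      destruct (descriptor_head _ _ _ _ _ D) as [Ht [Dt _]].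
      destruct (descriptor_head _ _ _ _ _ D') as [_ [Dt' _]].
      assert (a = a') by (rewrite <- Dt, <- Dt'; auto). subst a'.
      destruct (IH (L - t) ts ts' as') as [-> ->];
        [eapply descriptor_tail; eauto|eapply descriptor_tail; eauto| |auto].
      intros r Hr. specialize (E (r + t) ltac:(lra)). simpl in E.
      destruct (Req_EM_T (r + t) t); [lra|]. now replace (r + t - t) with r in E by ring.
Qed.

Fixpoint increments (l : list G) : list G :=
  match l with
  | a :: ((b :: _) as rest) => (inv a *g b) :: increments rest
  | _ => []
  end.

Lemma increments_length l : length (increments l) = pred (length l).
Proof.
  induction l as [|a l IH]; auto. destruct l as [|b l]; auto.
  simpl in IH |- *. now rewrite IH.
Qed.

Lemma increments_nontrivial (f : nat -> G) idx : NoDup idx ->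
  (forall i j, In i idx -> In j idx -> f i = f j -> i = j) ->
  Forall (fun a => a <> one) (increments (map f idx)).
Proof.
  induction idx as [|i idx IH]; intros ND Inj; [constructor|].
  destruct idx as [|j idx]; [constructor|]. inversion ND; subst.
  simpl. constructor.
  - intro E. apply divg_eq1, Inj in E; simpl; auto. subst. simpl in *. tauto.
  - apply IH; auto. intros i' j' Hi Hj. apply Inj; simpl; auto.
Qed.

(** The piece [[lo, hi]] of [[0, 1]] carrying the chain step from [src] to [tgt]. *)
Record segment := mkseg { seg_lo : R; seg_hi : R; seg_src : G; seg_tgt : G }.

Fixpoint spans (al be : R) (l : list segment) : Prop :=
  match l with
  | [] => al = be
  | q :: l' => seg_lo q = al /\ seg_lo q <= seg_hi q /\ spans (seg_hi q) be l'
  end.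

Fixpoint linked (x : G) (l : list segment) : Prop :=
  match l with
  | [] => True
  | q :: l' => seg_src q = x /\ linked (seg_tgt q) l'
  end.

Definition proper_segs (l : list segment) : list segment :=
  filter (fun q => if Rlt_dec (seg_lo q) (seg_hi q) then true else false) l.
Definition seg_lengths (l : list segment) : list R :=
  map (fun q => seg_hi q - seg_lo q) (proper_segs l).
Definition seg_jumps (l : list segment) : list G := increments (map seg_src (proper_segs l)).
Definition jumps_at (l : list segment) (r : R) : G :=
  prodl (map (fun q => inv (seg_src q) *g seg_tgt q)
    (filter (fun q => if Req_EM_T (seg_hi q) r then true else false) l)).

Lemma spans_hi_ge al be l : spans al be l -> al <= be /\ Forall (fun q => al <= seg_hi q) l.
Proof.
  revert al; induction l as [|q l IH]; intros al H; simpl in H.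
  - split; [lra|constructor].
  - destruct H as [H1 [H2 H3]]. destruct (IH _ H3) as [A B]. split; [lra|].
    constructor; [lra|]. eapply Forall_impl; [|exact B]. simpl; intros; lra.
Qed.

Lemma spans_degenerate al be l : spans al be l -> proper_segs l = [] ->
  al = be /\ Forall (fun q => seg_hi q = be) l.
Proof.
  revert al; induction l as [|q l IH]; intros al H F; simpl in H.
  - split; auto.
  - destruct H as [H1 [H2 H3]]. unfold proper_segs in F; simpl in F.
    destruct (Rlt_dec (seg_lo q) (seg_hi q)); [discriminate|].
    destruct (IH _ H3 F) as [A B]. split; [lra|]. constructor; auto; lra.
Qed.

Lemma proper_segs_lt q l : seg_lo q < seg_hi q -> proper_segs (q :: l) = q :: proper_segs l.
Proof.
  intro H. unfold proper_segs; simpl. destruct (Rlt_dec (seg_lo q) (seg_hi q)); [easy|lra].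
Qed.

Lemma proper_segs_nlt q l : ~ seg_lo q < seg_hi q -> proper_segs (q :: l) = proper_segs l.
Proof.
  intro H. unfold proper_segs; simpl. destruct (Rlt_dec (seg_lo q) (seg_hi q)); [lra|easy].
Qed.

Lemma jumps_at_cons q l r : jumps_at (q :: l) r =
  if Req_EM_T (seg_hi q) r then (inv (seg_src q) *g seg_tgt q) *g jumps_at l r
  else jumps_at l r.
Proof. unfold jumps_at; simpl. now destruct (Req_EM_T (seg_hi q) r). Qed.

Lemma jumps_at_none l r : Forall (fun q => seg_hi q <> r) l -> jumps_at l r = one.
Proof.
  induction 1; [reflexivity|]. rewrite jumps_at_cons.
  destruct (Req_EM_T (seg_hi x) r); [congruence|auto].
Qed.

Lemma jumps_at_below l al be r : spans al be l -> r < al -> jumps_at l r = one.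
Proof.
  intros H Hr. apply jumps_at_none. destruct (spans_hi_ge _ _ _ H) as [_ C].
  eapply Forall_impl; [|exact C]. simpl; intros; lra.
Qed.

(** The degenerate segments ending at the start of the first proper one telescope. *)
Lemma jumps_at_first_proper l b be y f0 rest :
  spans b be l -> linked y l -> proper_segs l = f0 :: rest ->
  jumps_at l b = inv y *g seg_src f0.
Proof.
  revert b y. induction l as [|q l IH]; intros b y H1 H2 F; [discriminate|].
  destruct H1 as [A1 [A2 A3]]. destruct H2 as [B1 B2]. rewrite jumps_at_cons.
  destruct (Rlt_dec (seg_lo q) (seg_hi q)) as [Hlt|Hnlt].
  - rewrite proper_segs_lt in F by auto. injection F as <- _.
    destruct (Req_EM_T (seg_hi q) b); [lra|].
    rewrite (jumps_at_below l (seg_hi q) be); [|auto|lra]. now rewrite B1, gmulV.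
  - rewrite proper_segs_nlt in F by auto.
    destruct (Req_EM_T (seg_hi q) b) as [E|]; [|lra]. rewrite E in A3.
    rewrite (IH b (seg_tgt q) A3 B2 F), B1, <- gmulA, mulKVg. reflexivity.
Qed.

Lemma seg_lengths_pos l : Forall (fun t => 0 < t) (seg_lengths l).
Proof.
  apply Forall_map, Forall_forall. intros q Hq. apply filter_In in Hq as [_ Hq].
  destruct (Rlt_dec (seg_lo q) (seg_hi q)); [lra|discriminate].
Qed.

Lemma seg_lengths_sum l al be : spans al be l -> Rsum (seg_lengths l) = be - al.
Proof.
  revert al; induction l as [|q l IH]; intros al H; simpl in H.
  - simpl. lra.
  - destruct H as [A1 [A2 A3]]. unfold seg_lengths, proper_segs; simpl.
    destruct (Rlt_dec (seg_lo q) (seg_hi q)); simpl; fold (proper_segs l);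
      fold (seg_lengths l); rewrite (IH _ A3); lra.
Qed.

Lemma seg_lengths_length l :
  proper_segs l <> [] -> length (seg_lengths l) = S (length (seg_jumps l)).
Proof.
  unfold seg_lengths, seg_jumps. rewrite increments_length, !length_map.
  now destruct (proper_segs l).
Qed.

Lemma decode_segments l al be x : spans al be l -> linked x l ->
  forall r, al < r < be -> decode (seg_lengths l) (seg_jumps l) (r - al) = jumps_at l r.
Proof.
  revert al x. induction l as [|q l IH]; intros al x H1 H2 r Hr; simpl in H1; [lra|].
  destruct H1 as [A1 [A2 A3]]. destruct H2 as [B1 B2]. rewrite jumps_at_cons.
  destruct (Rlt_dec (seg_lo q) (seg_hi q)) as [Hlt|Hnlt].
  - unfold seg_lengths, seg_jumps. rewrite (proper_segs_lt _ _ Hlt).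
    destruct (proper_segs l) as [|f0 rest] eqn:F.
    + destruct (spans_degenerate _ _ _ A3 F) as [C1 C2].
      destruct (Req_EM_T (seg_hi q) r); [lra|].
      rewrite jumps_at_none; [reflexivity|].
      eapply Forall_impl; [|exact C2]. simpl; intros; lra.
    + change (map (fun q0 => seg_hi q0 - seg_lo q0) (q :: f0 :: rest)) with
        ((seg_hi q - seg_lo q) :: map (fun q0 => seg_hi q0 - seg_lo q0) (f0 :: rest)).
      change (increments (map seg_src (q :: f0 :: rest))) with
        ((inv (seg_src q) *g seg_src f0) :: increments (map seg_src (f0 :: rest))).
      rewrite decode_cons.
      destruct (Req_EM_T (r - al) (seg_hi q - seg_lo q)) as [E|E].
      * destruct (Req_EM_T (seg_hi q) r); [|lra]. subst r.
        rewrite (jumps_at_first_proper l _ be (seg_tgt q) f0 rest A3 B2 F), B1.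
        now rewrite <- gmulA, mulKVg.
      * destruct (Req_EM_T (seg_hi q) r); [lra|].
        replace (r - al - (seg_hi q - seg_lo q)) with (r - seg_hi q) by lra.
        destruct (Rlt_dec (seg_hi q) r).
        -- pose proof (IH (seg_hi q) (seg_tgt q) A3 B2 r) as IH'.
           unfold seg_lengths, seg_jumps in IH'. rewrite F in IH'. apply IH'. lra.
        -- rewrite (jumps_at_below l (seg_hi q) be); [|auto|lra].
           apply decode_nonpos; [|lra].
           pose proof (seg_lengths_pos l) as Hp. unfold seg_lengths in Hp. now rewrite F in Hp.
  - destruct (Req_EM_T (seg_hi q) r); [lra|].
    rewrite <- (IH (seg_hi q) (seg_tgt q) A3 B2 r) by lra.
    unfold seg_lengths, seg_jumps. rewrite (proper_segs_nlt _ _ Hnlt). f_equal. lra.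
Qed.

End Descriptors.

Section SortedLists.
Variable A : Type.
Variable Rl : A -> A -> Prop.

Lemma StronglySorted_app l1 l2 : StronglySorted Rl l1 -> StronglySorted Rl l2 ->
  (forall x y, In x l1 -> In y l2 -> Rl x y) -> StronglySorted Rl (l1 ++ l2).
Proof.
  induction 1 as [|a l1 H1 IH H2]; intros S2 Hc; simpl; auto.
  constructor; [apply IH; auto; intros; apply Hc; simpl; auto|].
  apply Forall_app; split; auto. apply Forall_forall. intros y Hy. apply Hc; simpl; auto.
Qed.

Lemma StronglySorted_complete l : (forall x y, In x l -> In y l -> Rl x y) ->
  StronglySorted Rl l.
Proof.
  induction l as [|a l IH]; intros H; constructor.
  - apply IH; intros; apply H; simpl; auto.
  - apply Forall_forall; intros; apply H; simpl; auto.
Qed.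

Lemma StronglySorted_filter f l : StronglySorted Rl l -> StronglySorted Rl (filter f l).
Proof.
  induction 1 as [|a l H1 IH H2]; simpl; [constructor|].
  destruct (f a); auto. constructor; auto. apply Forall_forall. intros x Hx.
  apply filter_In in Hx as [Hx _]. rewrite Forall_forall in H2. auto.
Qed.

Lemma StronglySorted_nth l d i j : StronglySorted Rl l -> (i < j < length l)%nat ->
  Rl (nth i l d) (nth j l d).
Proof.
  intros H; revert i j; induction H as [|a l H1 IH H2]; intros i j Hij; simpl in Hij; [lia|].
  destruct i, j; try lia; simpl.
  - rewrite Forall_forall in H2. apply H2, nth_In. lia.
  - apply IH. lia.
Qed.

End SortedLists.

Lemma filter_filter_weaker {A} (f h : A -> bool) l :
  (forall x, f x = true -> h x = true) -> filter f (filter h l) = filter f l.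
Proof.
  induction l as [|a l IH]; intros H; simpl; auto.
  destruct (h a) eqn:E; simpl.
  - destruct (f a); [f_equal|]; auto.
  - destruct (f a) eqn:F; auto. rewrite H in E; auto; discriminate.
Qed.

Lemma StronglySorted_map {A B} (Rl : B -> B -> Prop) (f : A -> B) l :
  StronglySorted (fun a b => Rl (f a) (f b)) l -> StronglySorted Rl (map f l).
Proof.
  induction 1 as [|a l H1 IH H2]; simpl; constructor; auto.
  apply Forall_forall. intros y Hy. apply in_map_iff in Hy as [x [<- Hx]].
  rewrite Forall_forall in H2. auto.
Qed.

Lemma Sorted_map_seq {A} (Rl : A -> A -> Prop) (f : nat -> A) k m :
  (forall i, (k <= i)%nat -> (S i < k + m)%nat -> Rl (f i) (f (S i))) ->
  Sorted Rl (map f (seq k m)).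
Proof.
  revert k; induction m as [|m IH]; intros k H; simpl; [constructor|].
  constructor; [apply IH; intros i Hi Hi'; apply H; lia|].
  destruct m; simpl; constructor. apply H; lia.
Qed.

Lemma StronglySorted_Rlt_NoDup (s : list R) : StronglySorted Rlt s -> NoDup s.
Proof.
  induction 1 as [|a s H1 IH H2]; constructor; auto. intro Ha.
  rewrite Forall_forall in H2. specialize (H2 a Ha). lra.
Qed.

Lemma StronglySorted_Rlt_insert (s : list R) x : StronglySorted Rlt s ->
  exists s', StronglySorted Rlt s' /\ forall y, In y s' <-> y = x \/ In y s.
Proof.
  induction 1 as [|a s H1 IH H2].
  - exists [x]. split; [repeat constructor|]. intros y; simpl. intuition congruence.
  - rewrite Forall_forall in H2. destruct (total_order_T x a) as [[Hlt|Heq]|Hgt].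
    + exists (x :: a :: s). split; [|intros y; simpl; intuition congruence].
      constructor; [constructor; auto; now apply Forall_forall|].
      constructor; auto. apply Forall_forall. intros z Hz. specialize (H2 z Hz). lra.
    + subst. exists (a :: s). split; [constructor; auto; now apply Forall_forall|].
      intros y; simpl; intuition congruence.
    + destruct IH as [s' [S1 S2]]. exists (a :: s'). split.
      * constructor; auto. apply Forall_forall. intros z Hz. apply S2 in Hz as [->|Hz]; auto; lra.
      * intros y; simpl. rewrite S2. tauto.
Qed.

Lemma sorted_enumeration (l : list R) :
  exists s, StronglySorted Rlt s /\ forall x, In x s <-> In x l.
Proof.
  induction l as [|a l IH]; [exists []; split; [constructor|simpl; tauto]|].
  destruct IH as [s [S1 S2]]. destruct (StronglySorted_Rlt_insert s a S1) as [s' [T1 T2]].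
  exists s'. split; auto. intros x. rewrite T2, S2. simpl. intuition.
Qed.

Lemma StronglySorted_Rlt_eq (s s' : list R) : StronglySorted Rlt s -> StronglySorted Rlt s' ->
  (forall x, In x s <-> In x s') -> s = s'.
Proof.
  intros H; revert s'; induction H as [|a s H1 IH H2]; intros s' H' E.
  - destruct s' as [|b s']; auto. exfalso. apply (E b). simpl; auto.
  - destruct H' as [|b s' H1' H2']; [exfalso; apply (E a); simpl; auto|].
    rewrite Forall_forall in H2, H2'.
    assert (a = b).
    { assert (Ha : In a (b :: s')) by (apply E; simpl; auto).
      assert (Hb : In b (a :: s)) by (apply E; simpl; auto).
      destruct Ha as [Ha|Ha]; [auto|]. destruct Hb as [Hb|Hb]; [auto|].
      specialize (H2 b Hb). specialize (H2' a Ha). lra. }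
    subst b. f_equal. apply IH; auto. intros x; split; intro Hx.
    + assert (Hx' : In x (a :: s')) by (apply E; simpl; auto).
      destruct Hx' as [<-|Hx']; auto. specialize (H2 _ Hx); lra.
    + assert (Hx' : In x (a :: s)) by (apply E; simpl; auto).
      destruct Hx' as [<-|Hx']; auto. specialize (H2' _ Hx); lra.
Qed.

Section NatSums.
Variable A : Type.

Lemma list_sum_map_add (l : list A) (f h : A -> nat) :
  list_sum (map (fun x => f x + h x)%nat l) = (list_sum (map f l) + list_sum (map h l))%nat.
Proof. induction l as [|a l IH]; simpl; auto. rewrite IH. lia. Qed.

Lemma list_sum_map_eq0 (l : list A) (f : A -> nat) :
  list_sum (map f l) = 0%nat -> forall x, In x l -> f x = 0%nat.
Proof.
  induction l as [|a l IH]; simpl; intros H x Hx; [contradiction|].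
  destruct Hx as [<-|Hx]; [lia|]. apply IH; auto; lia.
Qed.

Lemma list_sum_map_0 (l : list A) (f : A -> nat) :
  (forall x, In x l -> f x = 0%nat) -> list_sum (map f l) = 0%nat.
Proof. induction l as [|a l IH]; simpl; intros H; auto. rewrite H, IH; auto. Qed.

End NatSums.

Lemma list_sum_map_incl (l1 l2 : list R) (f : R -> nat) : NoDup l1 -> NoDup l2 -> incl l1 l2 ->
  (forall x, In x l2 -> ~ In x l1 -> f x = 0%nat) -> list_sum (map f l2) = list_sum (map f l1).
Proof.
  intros N1 N2 Inc Z.
  set (ex := filter (fun x => if in_dec Req_EM_T x l1 then false else true) l2).
  assert (Pm : Permutation l2 (l1 ++ ex)).
  { apply NoDup_Permutation; auto.
    - apply NoDup_app; auto; [apply NoDup_filter; auto|].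
      intros a Ha Hb. apply filter_In in Hb as [_ Hb].
      destruct (in_dec Req_EM_T a l1); [discriminate|contradiction].
    - intros x; split; intro Hx.
      + apply in_or_app. destruct (in_dec Req_EM_T x l1); [left; auto|right].
        apply filter_In. split; auto. destruct (in_dec Req_EM_T x l1); [contradiction|auto].
      + apply in_app_or in Hx as [Hx|Hx]; auto. apply filter_In in Hx; tauto. }
  rewrite (Permutation_list_sum (Permutation_map f Pm)), map_app, list_sum_app.
  rewrite (list_sum_map_0 _ ex); [lia|]. intros x Hx. apply filter_In in Hx as [Hx1 Hx2].
  apply Z; auto. destruct (in_dec Req_EM_T x l1); [discriminate|auto].
Qed.

Lemma nth_map_seq {A : Type} (f : nat -> A) k n i d :
  (i < n)%nat -> nth i (map f (seq k n)) d = f (k + i)%nat.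
Proof.
  intro H. rewrite (nth_indep _ d (f 0%nat)) by (rewrite length_map, length_seq; auto).
  now rewrite map_nth, seq_nth.
Qed.

Section IntervalComplex.
Variable G : Group.
Variable X : G -> Prop.
Variable g : G.
Local Notation "a *g b" := (gmul G a b) (at level 40, left associativity).
Local Notation one := (gone G).
Local Notation inv := (ginv G).
Local Notation prodl := (@prodl G).
Local Notation ell := (@ell G X).
Local Notation Mon := (@Mon G X).
Local Notation word := (@word G X).
Local Notation le := (@le G X).
Local Notation reduced := (@reduced G X).
Local Notation wordlen := (@wordlen G X).
Local Notation maxchain := (@maxchain G X g).

(** Breakpoints [0 = cutpt 0 <= ... <= cutpt (S n) = 1] of [y], in the coordinates of
    [flip n y]. *)
Definition cutpt (n : nat) (y : nat -> R) (i : nat) : R :=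
  if Nat.eqb i 0 then 0 else if Nat.eqb i (S n) then 1 else 1 - y (S n - i)%nat.

(** Coordinates of O_g place the vertex [x_i] at the point whose last [i] coordinates
    are [1], while weighted factorizations put the [j]-th letter at [y_j]: [flip]
    converts between the two conventions. *)
Definition flip (n : nat) (y : nat -> R) (j : nat) : R := 1 - y (S n - j)%nat.

Definition chain_word (n : nat) (c : list G) : list G :=
  map (fun i => inv (nth i c one) *g nth (S i) c one) (seq 0 n).

Definition chain_segments (n : nat) (c : list G) (y : nat -> R) : list (segment G) :=
  map (fun i => mkseg G (cutpt n y i) (cutpt n y (S i)) (nth i c one) (nth (S i) c one))
    (seq 0 (S n)).

Lemma chain_word_length n c : length (chain_word n c) = n.
Proof. unfold chain_word. now rewrite length_map, length_seq. Qed.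

Lemma chain_word_nth n c i : (i < n)%nat ->
  nth i (chain_word n c) one = inv (nth i c one) *g nth (S i) c one.
Proof. intro H. unfold chain_word. now rewrite nth_map_seq. Qed.

Lemma bary_cutpt n y i : (i <= n)%nat -> bary n y i = cutpt n y (S i) - cutpt n y i.
Proof.
  intro H. unfold bary, yext, cutpt.
  destruct (Nat.eqb_spec (S n - i) 0); [lia|].
  destruct (Nat.eqb_spec (S n - i) (S n)); destruct (Nat.eqb_spec (n - i) 0);
  destruct (Nat.eqb_spec (n - i) (S n)); destruct (Nat.eqb_spec (S i) 0);
  destruct (Nat.eqb_spec (S i) (S n)); destruct (Nat.eqb_spec i 0);
  destruct (Nat.eqb_spec i (S n)); try lia; subst; simpl.
  all: try (replace (S n - S n)%nat with 0%nat by lia).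
  all: try replace (n - 0)%nat with n by lia.
  all: try replace (S n - S i)%nat with (n - i)%nat by lia.
  all: lra.
Qed.

Lemma cutpt_mono n y i : inDelta n y -> (i <= n)%nat -> cutpt n y i <= cutpt n y (S i).
Proof.
  intros [H1 H2] Hi. unfold cutpt.
  destruct (Nat.eqb_spec i 0); destruct (Nat.eqb_spec i (S n));
  destruct (Nat.eqb_spec (S i) 0); destruct (Nat.eqb_spec (S i) (S n)); try lia; try lra.
  - subst. replace (S n - 1)%nat with n by lia. assert (0 <= y n <= 1) by (apply H1; lia). lra.
  - assert (i = n) by lia. subst. replace (S n - n)%nat with 1%nat by lia.
    assert (0 <= y 1%nat <= 1) by (apply H1; lia). lra.
  - replace (S n - i)%nat with (S (n - i)) by lia.
    replace (S n - S i)%nat with (n - i)%nat by lia.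
    assert (y (n - i)%nat <= y (S (n - i))) by (apply H2; lia). lra.
Qed.

Lemma spans_chain_segments n c y : inDelta n y -> spans G 0 1 (chain_segments n c y).
Proof.
  intro HD.
  assert (Gen : forall k m, (k + m <= S n)%nat ->
    spans G (cutpt n y k) (cutpt n y (k + m))
      (map (fun i => mkseg G (cutpt n y i) (cutpt n y (S i)) (nth i c one) (nth (S i) c one))
        (seq k m))).
  { intros k m. revert k; induction m as [|m IH]; intros k Hk; simpl.
    - now rewrite Nat.add_0_r.
    - split; [reflexivity|]. split; [apply cutpt_mono; auto; lia|].
      replace (k + S m)%nat with (S k + m)%nat by lia. apply IH. lia. }
  pose proof (Gen 0%nat (S n) (le_n _)) as H. unfold cutpt at 1 2 in H.
  simpl in H. now rewrite Nat.eqb_refl in H.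
Qed.

Lemma linked_chain_segments n c y : linked G (nth 0 c one) (chain_segments n c y).
Proof.
  unfold chain_segments. generalize (S n) 0%nat. intro m.
  induction m as [|m IH]; intros k; simpl; auto.
Qed.

Lemma incs_increments (c : list G) idx :
  incs G c idx = increments G (map (fun i => nth i c one) idx).
Proof.
  induction idx as [|i idx IH]; [reflexivity|]. destruct idx as [|j idx]; [reflexivity|].
  simpl. f_equal. exact IH.
Qed.

Lemma Dsc_segments n c y :
  Dsc G n c y = (seg_lengths G (chain_segments n c y), seg_jumps G (chain_segments n c y)).
Proof.
  unfold Dsc, seg_lengths, seg_jumps, proper_segs, chain_segments, supp.
  rewrite incs_increments, filter_map_swap, !map_map. cbn [seg_lo seg_hi seg_src seg_tgt].
  assert (E : filter (fun i => if Rlt_dec 0 (bary n y i) then true else false) (seq 0 (S n)) =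
    filter (fun i => if Rlt_dec (cutpt n y i) (cutpt n y (S i)) then true else false)
      (seq 0 (S n))).
  { apply filter_ext_in. intros i Hi. apply in_seq in Hi. rewrite bary_cutpt by lia.
    destruct (Rlt_dec 0 (cutpt n y (S i) - cutpt n y i));
      destruct (Rlt_dec (cutpt n y i) (cutpt n y (S i))); auto; lra. }
  rewrite E. f_equal. apply map_ext_in. intros i Hi. apply filter_In in Hi as [Hi _].
  apply in_seq in Hi. apply bary_cutpt. lia.
Qed.

Lemma Phi_chain_word n c y r : 0 < r < 1 ->
  Phi G (chain_word n c) (flip n y) r = jumps_at G (chain_segments n c y) r.
Proof.
  intro Hr. unfold Phi, jumps_at, chain_segments. rewrite chain_word_length.
  rewrite <- seq_shift, !filter_map_swap, !map_map. cbn [seg_lo seg_hi seg_src seg_tgt].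
  rewrite seq_S, filter_app. cbn [filter]. rewrite Nat.add_0_l.
  assert (E1 : cutpt n y (S n) = 1) by (unfold cutpt; now rewrite Nat.eqb_refl).
  rewrite E1. destruct (Req_EM_T 1 r); [lra|]. rewrite app_nil_r.
  assert (E : forall i, In i (seq 0 n) -> flip n y (S i) = cutpt n y (S i)).
  { intros i Hi. apply in_seq in Hi. unfold flip, cutpt.
    destruct (Nat.eqb_spec (S i) 0); [lia|]. now destruct (Nat.eqb_spec (S i) (S n)); [lia|]. }
  rewrite (filter_ext_in _ (fun i => if Req_EM_T (cutpt n y (S i)) r then true else false))
    by (intros i Hi; now rewrite E).
  f_equal. apply map_ext_in. intros i Hi. apply filter_In in Hi as [Hi _].
  apply in_seq in Hi. simpl. rewrite Nat.sub_0_r. apply chain_word_nth. lia.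
Qed.

Lemma Dsc_descriptor n c y : inDelta n y ->
  (forall i j, (i <= n)%nat -> (j <= n)%nat -> nth i c one = nth j c one -> i = j) ->
  descriptor G 1 (fst (Dsc G n c y)) (snd (Dsc G n c y)).
Proof.
  intros HD Inj. pose proof (spans_chain_segments n c y HD) as Sp.
  assert (Hsum := seg_lengths_sum G _ _ _ Sp).
  split; [|split; [|split]].
  - rewrite Dsc_segments. apply seg_lengths_pos.
  - rewrite Dsc_segments. simpl. lra.
  - rewrite Dsc_segments. apply seg_lengths_length. intro E.
    unfold seg_lengths in Hsum. rewrite E in Hsum. simpl in Hsum. lra.
  - unfold Dsc. simpl. rewrite incs_increments. apply increments_nontrivial.
    + apply NoDup_filter, seq_NoDup.
    + intros i j Hi Hj. apply filter_In in Hi as [Hi _]. apply filter_In in Hj as [Hj _].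
      apply in_seq in Hi. apply in_seq in Hj. apply Inj; lia.
Qed.

Lemma decode_Dsc n c y r : inDelta n y -> 0 < r < 1 ->
  decode G (fst (Dsc G n c y)) (snd (Dsc G n c y)) r = Phi G (chain_word n c) (flip n y) r.
Proof.
  intros HD Hr. rewrite Dsc_segments, Phi_chain_word by auto. simpl.
  rewrite <- (decode_segments G _ 0 1 _ (spans_chain_segments n c y HD)
    (linked_chain_segments n c y) r Hr).
  f_equal. lra.
Qed.


Lemma maxchain_ell n c : ell g n -> maxchain n c ->
  forall i, (i <= n)%nat -> ell (nth i c one) i.
Proof.
  intros Eg [_ [H0 [Hn [Hle Hlt]]]].
  set (k := fun i => wordlen (nth i c one)).
  assert (Step : forall i, (i < n)%nat -> (S (k i) <= k (S i))%nat).
  { intros i Hi. destruct (Hlt i Hi) as [L Ne]. destruct (le_additive G X _ _ L) as [M E].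
    unfold k. rewrite E.
    destruct (wordlen (inv (nth i c one) *g nth (S i) c one)) eqn:Z; [|lia].
    exfalso. apply Ne, divg_eq1, (wordlen_eq0 G X); auto. }
  assert (Inc : forall j i, (i + j <= n)%nat -> (k i + j <= k (i + j))%nat).
  { induction j as [|j IH]; intros i Hij; [rewrite !Nat.add_0_r; lia|].
    specialize (IH i ltac:(lia)). specialize (Step (i + j)%nat ltac:(lia)).
    replace (i + S j)%nat with (S (i + j)) by lia. lia. }
  assert (K0 : k 0%nat = 0%nat) by (unfold k; rewrite H0; apply wordlen_one).
  assert (Kn : k n = n) by (unfold k; rewrite Hn; now apply wordlen_eq).
  intros i Hi.
  pose proof (Inc i 0%nat ltac:(lia)). pose proof (Inc (n - i)%nat i ltac:(lia)).
  replace (i + (n - i))%nat with n in * by lia. simpl in *.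
  replace i with (k i) at 2 by lia. apply wordlen_spec. eapply le_Mon_r, Hle, Hi.
Qed.

Lemma maxchain_inj n c : ell g n -> maxchain n c ->
  forall i j, (i <= n)%nat -> (j <= n)%nat -> nth i c one = nth j c one -> i = j.
Proof.
  intros Eg Mc i j Hi Hj E. pose proof (maxchain_ell n c Eg Mc i Hi) as Ei.
  rewrite E in Ei. apply (ell_unique G X _ _ _ Ei). now apply (maxchain_ell n c).
Qed.

Lemma ell_1_X x : ell x 1 -> X x.
Proof.
  intro H. destruct (ell_witness G X _ _ H) as [w [W [P L]]].
  destruct w as [|a [|b w]]; try discriminate. unfold Defs.prodl in P; simpl in P.
  rewrite mulg1 in P. subst. now inversion W.
Qed.

Lemma maxchain_reduced n c : ell g n -> maxchain n c -> reduced g (chain_word n c).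
Proof.
  intros Eg Mc. pose proof Mc as [_ [H0 [Hn [_ Hlt]]]].
  split; [|split; [|now rewrite chain_word_length]].
  - apply Forall_forall. intros x Hx. apply in_map_iff in Hx as [i [<- Hi]].
    apply in_seq in Hi. apply ell_1_X.
    destruct (le_additive G X _ _ (proj1 (Hlt i ltac:(lia)))) as [M E].
    rewrite (wordlen_eq G X _ _ (maxchain_ell n c Eg Mc i ltac:(lia))),
      (wordlen_eq G X _ _ (maxchain_ell n c Eg Mc (S i) ltac:(lia))) in E.
    replace 1%nat with (wordlen (inv (nth i c one) *g nth (S i) c one)) by lia.
    now apply wordlen_spec.
  - unfold chain_word. rewrite (prodl_telescope G (fun i => nth i c one)). simpl.
    rewrite H0, Hn, invg1. apply gmul1.
Qed.

Definition word_chain (w : list G) : list G :=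
  map (fun i => prodl (firstn i w)) (seq 0 (S (length w))).

Lemma word_chain_nth w i : (i <= length w)%nat -> nth i (word_chain w) one = prodl (firstn i w).
Proof. intro H. unfold word_chain. rewrite nth_map_seq by lia. reflexivity. Qed.

Lemma firstn_S_snoc (w : list G) i d : (i < length w)%nat ->
  firstn (S i) w = firstn i w ++ [nth i w d].
Proof.
  revert i; induction w as [|a w IH]; intros i Hi; simpl in Hi; [lia|].
  destruct i; [reflexivity|]. simpl. f_equal. apply IH. lia.
Qed.

Lemma prodl_firstn_S w i : (i < length w)%nat ->
  prodl (firstn (S i) w) = prodl (firstn i w) *g nth i w one.
Proof. intro Hi. now rewrite (firstn_S_snoc w i one), prodl_snoc. Qed.

Section ReducedWord.
Variable w : list G.
Hypothesis Hw : reduced g w.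

Lemma reduced_firstn i : wordlen (prodl (firstn i w)) = length (firstn i w).
Proof.
  apply (reduced_wordlen G X), (reduced_infix G X g [] _ (skipn i w)).
  now rewrite app_nil_l, firstn_skipn.
Qed.

Lemma reduced_skipn i : wordlen (prodl (skipn i w)) = length (skipn i w).
Proof.
  apply (reduced_wordlen G X), (reduced_infix G X g (firstn i w) _ []).
  now rewrite app_nil_r, firstn_skipn.
Qed.

Lemma reduced_letter i : (i < length w)%nat -> ell (nth i w one) 1.
Proof.
  intros Hi. assert (Ew : w = firstn i w ++ [nth i w one] ++ skipn (S i) w).
  { rewrite app_assoc, <- firstn_S_snoc by auto. symmetry. apply firstn_skipn. }
  rewrite Ew in Hw. destruct (reduced_infix G X g _ _ _ Hw) as [_ [_ E]].
  unfold Defs.prodl in E; simpl in E. now rewrite mulg1 in E.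
Qed.

Lemma firstn_word i : word (firstn i w) /\ word (skipn i w).
Proof.
  pose proof (reduced_word G X _ _ Hw) as W. rewrite <- (firstn_skipn i w) in W.
  now apply Forall_app in W.
Qed.

Lemma prefix_le i : le one (prodl (firstn i w)) /\ le (prodl (firstn i w)) g.
Proof.
  pose proof Hw as [_ [P E]].
  split; [apply le_one_l, Mon_word, firstn_word|].
  assert (Hq : inv (prodl (firstn i w)) *g g = prodl (skipn i w)).
  { rewrite <- P. rewrite <- (firstn_skipn i w) at 2. rewrite prodl_app. apply mulKg. }
  apply le_of_additive; [apply Mon_word, firstn_word|rewrite Hq; apply Mon_word, firstn_word|].
  rewrite Hq, reduced_firstn, reduced_skipn, (wordlen_eq G X _ _ E), length_firstn, length_skipn.
  lia.
Qed.

Lemma prefix_lt i : (i < length w)%nat ->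
  lt G X (prodl (firstn i w)) (prodl (firstn (S i) w)).
Proof.
  intro Hi. pose proof (reduced_letter i Hi) as L1.
  pose proof (reduced_firstn i) as Fi. pose proof (reduced_firstn (S i)) as FSi.
  rewrite !length_firstn in Fi, FSi. rewrite prodl_firstn_S in * by auto.
  split.
  - apply le_of_additive; rewrite ?mulKg; [apply Mon_word, firstn_word|eapply ell_Mon; eauto|].
    rewrite (wordlen_eq G X _ _ L1). lia.
  - intro Eq. rewrite <- Eq in FSi. lia.
Qed.

Lemma word_chain_maxchain : maxchain (length w) (word_chain w).
Proof.
  pose proof Hw as [_ [P _]].
  split; [unfold word_chain; now rewrite length_map, length_seq|].
  split; [now rewrite word_chain_nth by lia|].
  split; [rewrite word_chain_nth, firstn_all by lia; exact P|].
  split.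
  - intros i Hi. rewrite word_chain_nth by auto. apply prefix_le.
  - intros i Hi. rewrite !word_chain_nth by lia. now apply prefix_lt.
Qed.

Lemma chain_word_word_chain : chain_word (length w) (word_chain w) = w.
Proof.
  apply nth_ext with (d := one) (d' := one); [apply chain_word_length|].
  intros i Hi. rewrite chain_word_length in Hi.
  rewrite chain_word_nth, !word_chain_nth, prodl_firstn_S by lia. apply mulKg.
Qed.

End ReducedWord.

Definition frame (s : list R) : list R := 0 :: s ++ [1].

Lemma in_frame s r : Forall (fun r => 0 < r < 1) s -> In r (frame s) -> 0 <= r <= 1.
Proof.
  intros F [<-|Hr]; [lra|]. apply in_app_or in Hr as [Hr|[<-|[]]]; [|lra].
  rewrite Forall_forall in F. specialize (F r Hr). lra.
Qed.

Lemma frame_sorted s : StronglySorted Rlt s -> Forall (fun r => 0 < r < 1) s ->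
  StronglySorted Rlt (frame s).
Proof.
  intros H F. rewrite Forall_forall in F. constructor.
  - apply StronglySorted_app; auto; [repeat constructor|].
    intros x y Hx [<-|[]]. specialize (F x Hx). lra.
  - apply Forall_forall. intros x Hx. apply in_app_or in Hx as [Hx|[<-|[]]]; [|lra].
    specialize (F x Hx). lra.
Qed.

Lemma map_frame (u : R -> G) s : map u (frame s) = u 0 :: map u s ++ [u 1].
Proof. unfold frame. simpl. now rewrite map_app. Qed.

Lemma wfact_frame h u : wfact G X h u -> exists s,
  StronglySorted Rlt s /\ Forall (fun r => 0 < r < 1) s /\
  (forall r, 0 < r < 1 -> (u r <> one <-> In r s)) /\
  Forall Mon (map u (frame s)) /\ prodl (map u (frame s)) = h /\
  wordlen h = list_sum (map (fun r => wordlen (u r)) (frame s)).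
Proof.
  intros [_ [s [Ss [Fs [Iff [FM [_ [[ns [F2 Eh]] Pr]]]]]]]].
  rewrite <- map_frame in FM, F2, Pr. apply Forall2_ell_wordlen in F2. subst ns.
  exists s. split; [apply Sorted_StronglySorted; auto; intros a b c; apply Rlt_trans|].
  do 4 (split; auto). now rewrite (wordlen_eq G X _ _ Eh), map_map.
Qed.

Lemma wfact_intro h u s :
  (forall r, ~ (0 <= r <= 1) -> u r = one) ->
  StronglySorted Rlt s -> Forall (fun r => 0 < r < 1) s ->
  (forall r, 0 < r < 1 -> (u r <> one <-> In r s)) ->
  Forall Mon (map u (frame s)) -> prodl (map u (frame s)) = h ->
  ell h (list_sum (map (fun r => wordlen (u r)) (frame s))) -> wfact G X h u.
Proof.
  intros Hout Ss Fs Iff FM Pr Eh. split; auto. exists s.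
  split; [now apply StronglySorted_Sorted|]. split; auto. split; auto.
  unfold linfact. rewrite <- map_frame. split; auto. split.
  - rewrite Forall_forall in Fs |- *. intros a Ha. apply in_map_iff in Ha as [r [<- Hr]].
    pose proof (Fs r Hr). apply Iff; auto.
  - split; auto. exists (map wordlen (map u (frame s))).
    split; [now apply Forall2_wordlen|]. now rewrite map_map.
Qed.

Lemma frame_support (u : R -> G) s : (forall r, ~ (0 <= r <= 1) -> u r = one) ->
  (forall r, 0 < r < 1 -> (u r <> one <-> In r s)) ->
  forall r, u r <> one -> In r (frame s).
Proof.
  intros Hout Iff r E. destruct (classic (0 <= r <= 1)) as [H|H]; [|now rewrite Hout in E].
  destruct (Req_EM_T r 0) as [->|E0]; [left; auto|right].
  apply in_or_app. destruct (Req_EM_T r 1) as [->|E1]; [right; left; auto|left].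
  apply Iff; auto. lra.
Qed.

Lemma wfact_Mon h u : wfact G X h u -> forall r, Mon (u r).
Proof.
  intros W r. pose proof W as [Hout _].
  destruct (wfact_frame h u W) as [s [_ [_ [Iff [FM _]]]]].
  destruct (classic (u r = one)) as [E|E]; [rewrite E; apply Mon_one|].
  rewrite Forall_forall in FM. apply FM, in_map. now apply (frame_support u s).
Qed.

Lemma support_eq (u v : R -> G) s t :
  StronglySorted Rlt s -> Forall (fun r => 0 < r < 1) s ->
  (forall r, 0 < r < 1 -> (u r <> one <-> In r s)) ->
  StronglySorted Rlt t -> Forall (fun r => 0 < r < 1) t ->
  (forall r, 0 < r < 1 -> (v r <> one <-> In r t)) ->
  (forall r, 0 < r < 1 -> u r = v r) -> s = t.
Proof.
  intros S1 F1 I1 S2 F2 I2 E. apply StronglySorted_Rlt_eq; auto.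
  rewrite Forall_forall in F1, F2. intros x; split; intro Hx.
  - pose proof (F1 x Hx). apply I2; auto. rewrite <- E by auto. apply I1; auto.
  - pose proof (F2 x Hx). apply I1; auto. rewrite E by auto. apply I2; auto.
Qed.

Lemma wfact_wordlen_sum h u T : wfact G X h u -> NoDup T -> In 0 T -> In 1 T ->
  (forall r, 0 < r < 1 -> u r <> one -> In r T) ->
  wordlen h = list_sum (map (fun r => wordlen (u r)) T).
Proof.
  intros W NT I0 I1 IT. pose proof W as [Hout _].
  destruct (wfact_frame h u W) as [s [Ss [Fs [Iff [_ [_ Eh]]]]]].
  rewrite Eh. symmetry. apply list_sum_map_incl; auto.
  - now apply StronglySorted_Rlt_NoDup, frame_sorted.
  - intros r [<-|Hr]; auto. apply in_app_or in Hr as [Hr|[<-|[]]]; auto.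
    rewrite Forall_forall in Fs. apply IT; [auto|]. apply Iff; auto.
  - intros r _ Hr. replace (u r) with one; [apply wordlen_one|].
    apply NNPP. intro Ne. now apply Hr, (frame_support u s).
Qed.

Definition at_pos (r : R) (p : G * R) : bool := if Req_EM_T (snd p) r then true else false.
Definition mset_of (P : list (G * R)) (r : R) : G := prodl (map fst (filter (at_pos r) P)).
Definition pos_le (p q : G * R) : Prop := snd p <= snd q.
Definition place (w : list G) (z : nat -> R) : list (G * R) :=
  map (fun j => (nth (j - 1) w one, z j)) (seq 1 (length w)).

Lemma Phi_place w z : Phi G w z = mset_of (place w z).
Proof.
  apply functional_extensionality. intro r.
  unfold Phi, mset_of, place, at_pos. now rewrite filter_map_swap, map_map.
Qed.

Lemma place_fst w z : map fst (place w z) = w.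
Proof.
  unfold place. rewrite map_map. apply nth_ext with (d := one) (d' := one).
  - now rewrite length_map, length_seq.
  - intros i Hi. rewrite length_map, length_seq in Hi. rewrite nth_map_seq by auto.
    simpl. now rewrite Nat.sub_0_r.
Qed.

Lemma place_sorted w z : inDelta (length w) z -> StronglySorted pos_le (place w z).
Proof.
  intros [_ H2]. apply Sorted_StronglySorted; [intros a b c; unfold pos_le; lra|].
  apply Sorted_map_seq. intros i Hi Hi'. apply H2. lia.
Qed.

Lemma place_range w z : inDelta (length w) z -> Forall (fun p => 0 <= snd p <= 1) (place w z).
Proof.
  intros [H1 _]. apply Forall_forall. intros p Hp.
  apply in_map_iff in Hp as [j [<- Hj]]. apply in_seq in Hj. apply H1. lia.
Qed.

Lemma place_unplace P : StronglySorted pos_le P -> Forall (fun p => 0 <= snd p <= 1) P ->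
  let z := fun j => nth (j - 1) (map snd P) 0 in
  place (map fst P) z = P /\ inDelta (length (map fst P)) z.
Proof.
  intros SS F z. rewrite length_map. rewrite Forall_forall in F. split; [|split].
  - apply nth_ext with (d := (one, 0)) (d' := (one, 0)).
    + unfold place. now rewrite length_map, length_seq, length_map.
    + intros i Hi. unfold place in Hi |- *. rewrite length_map, length_seq, length_map in Hi.
      rewrite nth_map_seq by (rewrite length_map; auto). unfold z. simpl. rewrite Nat.sub_0_r.
      rewrite (nth_indep _ one (fst (one, 0))), (nth_indep _ 0 (snd (one, 0)))
        by (rewrite length_map; auto).
      rewrite !map_nth. now destruct (nth i P (one, 0)).
  - intros j Hj. unfold z. destruct j; [lia|]. simpl. rewrite Nat.sub_0_r.
    rewrite (nth_indep _ 0 (snd (one, 0))), map_nth by (rewrite length_map; lia).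
    apply F, nth_In. lia.
  - intros j Hj. unfold z. destruct j; [lia|]. simpl. rewrite Nat.sub_0_r.
    apply (StronglySorted_nth _ Rle (map snd P) 0 j (S j)); [|rewrite length_map; lia].
    now apply StronglySorted_map.
Qed.

Lemma mset_of_none P r : (forall p, In p P -> snd p <> r) -> mset_of P r = one.
Proof.
  intro H. unfold mset_of. rewrite (filter_ext_in _ (fun _ => false)), filter_false; [easy|].
  intros p Hp. unfold at_pos. destruct (Req_EM_T (snd p) r); auto. now apply H in Hp.
Qed.

Lemma mset_of_concat (Ls : list (list (G * R))) r :
  mset_of (concat Ls) r = prodl (map (fun l => mset_of l r) Ls).
Proof.
  unfold mset_of. now rewrite <- concat_filter_map, concat_map, prodl_concat, !map_map.
Qed.

Lemma mset_of_word P r : word (map fst P) -> word (map fst (filter (at_pos r) P)).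
Proof.
  unfold Defs.word. rewrite !Forall_forall. intros H x Hx. apply in_map_iff in Hx as [p [<- Hp]].
  apply filter_In in Hp as [Hp _]. apply H, in_map, Hp.
Qed.

Lemma split_at_first_pos (P : list (G * R)) v : StronglySorted pos_le P ->
  (forall p, In p P -> v <= snd p) ->
  filter (at_pos v) P ++ filter (fun p => negb (at_pos v p)) P = P.
Proof.
  induction 1 as [|p P H1 IH H2]; intros Hv; simpl; auto.
  destruct (at_pos v p) eqn:Ev; simpl.
  - f_equal. apply IH. intros; apply Hv; simpl; auto.
  - unfold at_pos in Ev. destruct (Req_EM_T (snd p) v) as [E|E]; [discriminate|].
    assert (v < snd p) by (pose proof (Hv p (or_introl eq_refl)); lra).
    rewrite Forall_forall in H2.
    rewrite (filter_ext_in _ (fun _ => false)), filter_false,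
      (filter_ext_in _ (fun _ => true)), filter_true; [easy| |];
      intros q Hq; specialize (H2 q Hq); unfold pos_le, at_pos in *;
      destruct (Req_EM_T (snd q) v); auto; lra.
Qed.

Lemma group_by_positions (S : list R) (P : list (G * R)) :
  StronglySorted Rlt S -> StronglySorted pos_le P -> (forall p, In p P -> In (snd p) S) ->
  concat (map (fun r => filter (at_pos r) P) S) = P.
Proof.
  intros HS; revert P; induction HS as [|v S H1 IH H2]; intros P HP Hin; simpl.
  - destruct P as [|p P]; auto. exfalso. apply (Hin p). simpl; auto.
  - rewrite Forall_forall in H2.
    assert (Hge : forall p, In p P -> v <= snd p).
    { intros p Hp. destruct (Hin p Hp) as [E|E]; [lra|]. specialize (H2 _ E). lra. }
    rewrite <- (split_at_first_pos P v) at 2 by auto. f_equal.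
    rewrite <- (IH (filter (fun p => negb (at_pos v p)) P)).
    + f_equal. apply map_ext_in. intros r Hr. symmetry. apply filter_filter_weaker.
      intros p. unfold at_pos. specialize (H2 r Hr).
      destruct (Req_EM_T (snd p) r), (Req_EM_T (snd p) v); auto; lra.
    + now apply StronglySorted_filter.
    + intros p Hp. apply filter_In in Hp as [Hp Hn]. destruct (Hin p Hp) as [E|E]; auto.
      unfold at_pos in Hn. destruct (Req_EM_T (snd p) v); [discriminate|congruence].
Qed.

Definition in_unit_interval (x : R) : bool :=
  if Rlt_dec 0 x then if Rlt_dec x 1 then true else false else false.

Lemma positions_frame (P : list (G * R)) : Forall (fun p => 0 <= snd p <= 1) P -> exists s,
  StronglySorted Rlt s /\ Forall (fun r => 0 < r < 1) s /\
  (forall x, In x s <-> In x (map snd P) /\ 0 < x < 1) /\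
  (forall p, In p P -> In (snd p) (frame s)).
Proof.
  intro F01. rewrite Forall_forall in F01.
  destruct (sorted_enumeration (filter in_unit_interval (map snd P))) as [s [Ss Es]].
  assert (Es' : forall x, In x s <-> In x (map snd P) /\ 0 < x < 1).
  { intros x. rewrite Es, filter_In. unfold in_unit_interval.
    destruct (Rlt_dec 0 x), (Rlt_dec x 1); split; intros [A B]; split; auto; try lra;
      discriminate. }
  exists s. split; auto. split; [apply Forall_forall; intros x Hx; now apply Es'|].
  split; auto. intros p Hp. specialize (F01 p Hp).
  destruct (Req_EM_T (snd p) 0) as [E0|E0]; [now left|].
  right. apply in_or_app. destruct (Req_EM_T (snd p) 1) as [E1|E1]; [right; now left|].
  left. apply Es'. split; [now apply in_map|lra].
Qed.

Lemma reduced_position_blocks (P : list (G * R)) S : reduced g (map fst P) ->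
  StronglySorted Rlt S -> StronglySorted pos_le P -> (forall p, In p P -> In (snd p) S) ->
  forall r, In r S -> wordlen (mset_of P r) = length (filter (at_pos r) P).
Proof.
  intros Red SS SSP Hin r Hr.
  set (blocks := map (fun r => filter (at_pos r) P) S).
  assert (GC : concat blocks = P) by now apply group_by_positions.
  rewrite <- (length_map fst). apply (reduced_wordlen G X).
  apply (reduced_in_concat G X g (map (map fst) blocks)).
  - now rewrite <- concat_map, GC.
  - unfold blocks. rewrite map_map. now apply (in_map (fun r => map fst (filter (at_pos r) P))).
Qed.

Lemma wfact_mset_of P : reduced g (map fst P) -> StronglySorted pos_le P ->
  Forall (fun p => 0 <= snd p <= 1) P -> wfact G X g (mset_of P).
Proof.
  intros Red SSP F01.
  destruct (positions_frame P F01) as [s [Ss [Fs [Es Hin]]]].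
  assert (SF := frame_sorted s Ss Fs).
  assert (GC := group_by_positions _ P SF SSP Hin).
  assert (Hblock := reduced_position_blocks P _ Red SF SSP Hin).
  assert (Hocc : forall r, In r (map snd P) -> mset_of P r <> one).
  { intros r Hr E. apply in_map_iff in Hr as [p [<- Hp]].
    pose proof (Hblock (snd p) (Hin p Hp)) as Z. rewrite E, wordlen_one in Z.
    assert (Hpp : In p (filter (at_pos (snd p)) P)).
    { apply filter_In. split; auto. unfold at_pos. now destruct (Req_EM_T (snd p) (snd p)). }
    destruct (filter (at_pos (snd p)) P); [contradiction|discriminate]. }
  apply wfact_intro with s; auto.
  - intros r Hr. apply mset_of_none. intros p Hp E. apply Hr. rewrite <- E.
    rewrite Forall_forall in F01. auto.
  - intros r Hr. split; intro H.
    + apply Es. split; auto. apply NNPP. intro Hn. apply H, mset_of_none.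
      intros p Hp E. apply Hn. rewrite <- E. now apply in_map.
    + now apply Hocc, Es.
  - apply Forall_forall. intros x Hx. apply in_map_iff in Hx as [r [<- _]].
    apply Mon_word, mset_of_word, Red.
  - destruct Red as [_ [Pg _]]. rewrite <- Pg. rewrite <- GC at 2.
    now rewrite concat_map, prodl_concat, !map_map.
  - replace (list_sum (map (fun r => wordlen (mset_of P r)) (frame s))) with (length P).
    + rewrite <- (length_map fst). apply Red.
    + rewrite <- GC at 1. rewrite length_concat, map_map.
      f_equal. apply map_ext_in. intros r Hr. symmetry. now apply Hblock.
Qed.

Definition block (W : R -> list G) (r : R) : list (G * R) := map (fun a => (a, r)) (W r).

Lemma block_sorted (W : R -> list G) S : StronglySorted Rlt S ->
  StronglySorted pos_le (concat (map (block W) S)).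
Proof.
  induction 1 as [|v S H1 IH H2]; simpl; [constructor|].
  apply StronglySorted_app; auto.
  - apply StronglySorted_complete. intros x y Hx Hy. unfold block in *.
    apply in_map_iff in Hx as [a [<- _]]. apply in_map_iff in Hy as [b [<- _]].
    unfold pos_le; simpl; lra.
  - intros x y Hx Hy. unfold block in Hx. apply in_map_iff in Hx as [a [<- _]].
    apply in_concat in Hy as [l [Hl Hy]]. apply in_map_iff in Hl as [r [<- Hr]].
    unfold block in Hy. apply in_map_iff in Hy as [b [<- _]]. unfold pos_le; simpl.
    rewrite Forall_forall in H2. specialize (H2 r Hr). lra.
Qed.

Lemma mset_of_block W r' r : mset_of (block W r') r = if Req_EM_T r' r then prodl (W r') else one.
Proof.
  unfold mset_of, block, at_pos. rewrite filter_map_swap. simpl.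
  destruct (Req_EM_T r' r).
  - now rewrite filter_true, map_map, map_id.
  - now rewrite filter_false.
Qed.

Lemma prodl_indicator (f : R -> G) l r : NoDup l ->
  prodl (map (fun r' => if Req_EM_T r' r then f r' else one) l) =
  if in_dec Req_EM_T r l then f r else one.
Proof.
  induction 1 as [|a l Ha ND IH]; [reflexivity|]. cbn [map]. rewrite prodl_cons, IH.
  destruct (Req_EM_T a r) as [<-|E].
  - destruct (in_dec Req_EM_T a l); [contradiction|].
    destruct (in_dec Req_EM_T a (a :: l)) as [_|C]; [apply mulg1|]. exfalso; apply C; now left.
  - rewrite gmul1. destruct (in_dec Req_EM_T r l) as [I|I], (in_dec Req_EM_T r (a :: l)) as [I'|I'];
      auto; exfalso; [apply I'; now right|destruct I'; auto].
Qed.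

Lemma wfact_eq_mset_of u : wfact G X g u -> exists P, reduced g (map fst P) /\
  StronglySorted pos_le P /\ Forall (fun p => 0 <= snd p <= 1) P /\
  forall r, 0 < r < 1 -> mset_of P r = u r.
Proof.
  intro Wu. pose proof Wu as [Hout _].
  destruct (wfact_frame g u Wu) as [s [Ss [Fs [Iff [FM [Pr Eg]]]]]].
  rewrite Forall_forall in FM.
  assert (MS : forall r, In r (frame s) -> Mon (u r)) by (intros r Hr; apply FM, in_map, Hr).
  set (W := fun r => epsilon (inhabits [])
    (fun w => word w /\ prodl w = u r /\ length w = wordlen (u r))).
  assert (HW : forall r, In r (frame s) ->
    word (W r) /\ prodl (W r) = u r /\ length (W r) = wordlen (u r)).
  { intros r Hr. apply epsilon_spec, wordlen_witness, MS, Hr. }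
  exists (concat (map (block W) (frame s))).
  assert (Efst : map fst (concat (map (block W) (frame s))) = concat (map W (frame s))).
  { rewrite concat_map, map_map. f_equal. apply map_ext. intro r. unfold block.
    now rewrite map_map, map_id. }
  split; [|split; [|split]].
  - rewrite Efst. split; [|split].
    + apply Forall_concat, Forall_forall. intros l Hl.
      apply in_map_iff in Hl as [r [<- Hr]]. now apply HW.
    + rewrite prodl_concat, map_map, <- Pr. f_equal. apply map_ext_in. intros r Hr. now apply HW.
    + rewrite length_concat, map_map.
      replace (list_sum (map (fun r => length (W r)) (frame s))) with (wordlen g).
      * apply wordlen_spec. rewrite <- Pr. now apply Mon_prodl, Forall_forall.
      * rewrite Eg. f_equal. apply map_ext_in. intros r Hr. symmetry. now apply HW.
  - apply block_sorted, frame_sorted; auto.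
  - apply Forall_forall. intros p Hp. apply in_concat in Hp as [l [Hl Hp]].
    apply in_map_iff in Hl as [r [<- Hr]]. unfold block in Hp.
    apply in_map_iff in Hp as [a [<- _]]. now apply (in_frame s).
  - intros r Hr. rewrite mset_of_concat, map_map.
    transitivity (prodl (map (fun r' => if Req_EM_T r' r then u r' else one) (frame s))).
    + f_equal. apply map_ext_in. intros r' Hr'. rewrite mset_of_block.
      destruct (Req_EM_T r' r); auto. now apply HW.
    + rewrite prodl_indicator by now apply StronglySorted_Rlt_NoDup, frame_sorted.
      destruct (in_dec Req_EM_T r (frame s)) as [I|I]; auto.
      apply NNPP. intro E. now apply I, (frame_support u s).
Qed.

Local Notation inF := (@inF G X g).
Local Notation equivF := (@equivF G g).
Local Notation FSpt := (@FSpt G X g).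

Lemma equivF_refl p : equivF p p.
Proof. now split. Qed.

Lemma equivF_sym p q : equivF p q -> equivF q p.
Proof. intros [A B]. split; auto. intros r Hr; symmetry; auto. Qed.

Lemma equivF_trans p q t : equivF p q -> equivF q t -> equivF p t.
Proof. intros [A B] [C D]. split; [intros r Hr; rewrite A; auto|congruence]. Qed.

Lemma wfact_ends h u : wfact G X h u -> exists s,
  StronglySorted Rlt s /\ Forall (fun r => 0 < r < 1) s /\
  (forall r, 0 < r < 1 -> (u r <> one <-> In r s)) /\
  u 0 *g (prodl (map u s) *g u 1) = h.
Proof.
  intro W. destruct (wfact_frame h u W) as [s [Ss [Fs [Iff [_ [Pr _]]]]]].
  exists s. do 3 (split; auto). now rewrite map_frame, prodl_cons, prodl_snoc in Pr.
Qed.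

Lemma equivF_of_interior p q : inF p -> inF q -> fst p = g -> fst q = g ->
  (forall r, 0 < r < 1 -> snd p r = snd q r) -> equivF p q.
Proof.
  intros [_ [_ Wp]] [_ [_ Wq]] Ep Eq E. rewrite Ep in Wp. rewrite Eq in Wq.
  destruct (wfact_ends _ _ Wp) as [s [S1 [F1 [I1 P1]]]].
  destruct (wfact_ends _ _ Wq) as [t [S2 [F2 [I2 P2]]]].
  assert (s = t) by (eapply support_eq; eauto). subst t.
  split; auto. rewrite (circular_value_top _ _ _ _ _ P1), (circular_value_top _ _ _ _ _ P2).
  do 3 f_equal. apply map_ext_in. intros r Hr. rewrite Forall_forall in F1. auto.
Qed.

Lemma equivF_top p q : inF p -> inF q -> fst p = g -> equivF p q -> fst q = g.
Proof.
  intros [_ [_ Wp]] [_ [_ Wq]] Ep [E C]. rewrite Ep in Wp.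
  destruct (wfact_ends _ _ Wp) as [s [S1 [F1 [I1 P1]]]].
  destruct (wfact_ends _ _ Wq) as [t [S2 [F2 [I2 P2]]]].
  assert (s = t) by (eapply support_eq; eauto). subst t.
  replace (map (snd q) s) with (map (snd p) s) in P2.
  - exact (circular_value_eq_top _ _ _ _ _ _ _ _ P1 P2 C).
  - apply map_ext_in. intros r Hr. rewrite Forall_forall in F1. auto.
Qed.

Definition mkclass (p : G * (R -> G)) (H : inF p) : FSpt :=
  exist _ (fun q => inF q /\ equivF p q) (ex_intro _ p (conj H eq_refl)).

Lemma mkclass_mem p H : proj1_sig (mkclass p H) p.
Proof. split; auto. apply equivF_refl. Qed.

Lemma class_equivF (A : FSpt) p q : proj1_sig A p -> proj1_sig A q -> equivF p q.
Proof.
  destruct A as [PA [p0 [H0 ->]]]. simpl. intros [_ E1] [_ E2].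
  eapply equivF_trans; [apply equivF_sym; exact E1|exact E2].
Qed.

Lemma class_inF (A : FSpt) p : proj1_sig A p -> inF p.
Proof. destruct A as [PA [p0 [H0 ->]]]. simpl. tauto. Qed.

Lemma class_add (A : FSpt) p q : proj1_sig A p -> inF q -> equivF p q -> proj1_sig A q.
Proof.
  destruct A as [PA [p0 [H0 ->]]]. simpl. intros [_ E1] I E2. split; auto.
  eapply equivF_trans; eauto.
Qed.

Lemma class_eq (A B : FSpt) q : proj1_sig A q -> proj1_sig B q -> A = B.
Proof.
  intros HA HB.
  assert (E : proj1_sig A = proj1_sig B).
  { apply functional_extensionality. intro x. apply propositional_extensionality.
    split; intro Hx.
    - apply (class_add B q x HB (class_inF A x Hx)).
      apply (class_equivF A q x HA Hx).
    - apply (class_add A q x HA (class_inF B x Hx)).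
      apply (class_equivF B q x HB Hx). }
  destruct A as [PA HA']. destruct B as [PB HB']. simpl in E. subst PB.
  f_equal. apply proof_irrelevance.
Qed.

Lemma le_nontrivial a b : le a b -> a <> one -> b <> one.
Proof.
  intros L Na Eb. destruct (le_additive G X _ _ L) as [_ E].
  rewrite Eb, wordlen_one in E. apply Na, (wordlen_eq0 G X); [apply L|lia].
Qed.

Definition extend_end (u : R -> G) (k : G) : R -> G :=
  fun r => if Req_EM_T r 1 then u 1 *g k else u r.

Lemma wfact_extend_end h u : wfact G X h u -> le h g ->
  wfact G X g (extend_end u (inv h *g g)) /\ le (u 1) (u 1 *g (inv h *g g)).
Proof.
  intros W L. set (v := extend_end u _). pose proof W as [Hout _].
  destruct (le_additive G X _ _ L) as [Mh' Eh']. set (h' := inv h *g g) in *.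
  destruct (wfact_frame h u W) as [s [Ss [Fs [Iff [FM [Pr Eh]]]]]].
  set (pre := map u (0 :: s)).
  assert (Hsplit : forall (B : Type) (f : R -> B), map f (frame s) = map f (0 :: s) ++ [f 1])
    by (intros B f; change (frame s) with ((0 :: s) ++ [1]); apply map_app).
  assert (Ev1 : v 1 = u 1 *g h') by (unfold v, extend_end; now destruct (Req_EM_T 1 1)).
  assert (Epre : map v (0 :: s) = pre).
  { apply map_ext_in. intros r Hr. unfold v, extend_end. destruct (Req_EM_T r 1); auto.
    exfalso. destruct Hr as [<-|Hr]; [lra|]. rewrite Forall_forall in Fs. specialize (Fs r Hr). lra. }
  rewrite Hsplit, Forall_app in FM. destruct FM as [FMpre FM1]. apply Forall_inv in FM1.
  rewrite Hsplit, prodl_snoc in Pr. fold pre in Pr, FMpre.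
  assert (Eh2 : wordlen h = (list_sum (map wordlen pre) + wordlen (u 1%R))%nat)
    by (unfold pre; rewrite Eh, Hsplit, list_sum_app, map_map; simpl; lia).
  assert (Mg : Mon g) by (eapply le_Mon_r; eauto).
  assert (Hg : h *g h' = g) by apply mulKVg.
  assert (Mv1 : Mon (u 1 *g h')) by now apply Mon_mul.
  assert (Key : wordlen (u 1 *g h') = (wordlen (u 1%R) + wordlen h')%nat).
  { pose proof (wordlen_mul_le G X (u 1) h' FM1 Mh').
    pose proof (wordlen_prodl_le G X (pre ++ [u 1 *g h'])
      ltac:(apply Forall_app; split; auto)) as Sub.
    rewrite prodl_snoc, gmulA, Pr, Hg, map_app, list_sum_app in Sub.
    cbn [map list_sum fold_right] in Sub. lia. }
  split.
  - apply wfact_intro with s; auto.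
    + intros r Hr. unfold v, extend_end. destruct (Req_EM_T r 1); [exfalso; apply Hr; lra|auto].
    + intros r Hr. unfold v, extend_end. destruct (Req_EM_T r 1); [lra|auto].
    + rewrite Hsplit, Epre, Ev1. apply Forall_app. split; auto.
    + now rewrite Hsplit, Epre, Ev1, prodl_snoc, gmulA, Pr.
    + rewrite Hsplit, list_sum_app, <- (map_map v wordlen), Epre, Ev1.
      cbn [list_sum fold_right].
      replace (list_sum (map wordlen pre) + (wordlen (u 1%R *g h') + 0))%nat
        with (wordlen g) by lia.
      now apply wordlen_spec.
  - apply le_of_additive; auto; rewrite mulKg; auto.
Qed.

Lemma maximal_top (A : FSpt) p : maximalFS A -> proj1_sig A p -> fst p = g.
Proof.
  intros Hmax Hp. pose proof (class_inF A p Hp) as Ip. pose proof Ip as [_ [L2 W]].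
  destruct (classic (fst p = g)) as [E|Hne]; auto. exfalso.
  destruct (wfact_extend_end _ _ W L2) as [Wv Lv].
  set (v := extend_end _ _) in Wv.
  assert (Iq : inF (g, v)).
  { pose proof (le_Mon_r G X _ _ L2). split; [now apply le_one_l|split; [now apply le_refl|exact Wv]]. }
  assert (Hle : leFS A (mkclass _ Iq)).
  { exists p, (g, v). split; auto. split; [apply mkclass_mem|]. intros r Hr. simpl.
    unfold v, extend_end. destruct (Req_EM_T r 1) as [->|]; auto.
    apply le_refl, (wfact_Mon _ _ W). }
  pose proof (mkclass_mem _ Iq) as Mq. rewrite (Hmax _ Hle) in Mq.
  destruct (class_equivF A p _ Hp Mq) as [_ C]. simpl in C.
  unfold v, extend_end in C. destruct (Req_EM_T 1 1); [|congruence]. destruct (Req_EM_T 0 1); [lra|].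
  apply mulg_mid_eq1, divg_eq1 in C. now apply Hne.
Qed.

(** Refining a factorization of [g] cannot increase the total word length, so
    every refining quotient [u r^-1 v r] is trivial. *)
Lemma wfact_top_refinement_eq hq u v : wfact G X g u -> wfact G X hq v -> le hq g ->
  (forall r, 0 <= r <= 1 -> le (u r) (v r)) -> forall r, 0 <= r <= 1 -> v r = u r.
Proof.
  intros Wu Wv Lqg Hsub.
  assert (Dec : forall r, 0 <= r <= 1 -> Mon (inv (u r) *g v r) /\
    wordlen (v r) = (wordlen (u r) + wordlen (inv (u r) *g v r))%nat)
    by (intros r Hr; apply le_additive, Hsub, Hr).
  assert (Supp : forall r, u r <> one -> v r <> one).
  { intros r Hr. destruct (classic (0 <= r <= 1)) as [H01|H01].
    - apply (le_nontrivial (u r)); auto.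
    - exfalso. apply Hr. now apply Wu. }
  destruct (wfact_frame _ _ Wv) as [t [St [Ft [Ivt _]]]].
  pose proof Wv as [Hvout _].
  set (T := frame t).
  assert (NT : NoDup T) by now apply StronglySorted_Rlt_NoDup, frame_sorted.
  assert (InT : forall r, In r T -> 0 <= r <= 1) by (intros r; now apply in_frame).
  assert (I1 : In 1 T) by (right; apply in_or_app; right; now left).
  assert (Su := wfact_wordlen_sum _ _ T Wu NT (or_introl eq_refl) I1
    ltac:(intros r Hr Ne; apply (frame_support v t Hvout Ivt), Supp, Ne)).
  assert (Sv := wfact_wordlen_sum _ _ T Wv NT (or_introl eq_refl) I1
    ltac:(intros r Hr Ne; now apply (frame_support v t Hvout Ivt))).
  assert (Sum : list_sum (map (fun r => wordlen (v r)) T) =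
    (list_sum (map (fun r => wordlen (u r)) T) +
     list_sum (map (fun r => wordlen (inv (u r) *g v r)) T))%nat).
  { rewrite <- list_sum_map_add. f_equal. apply map_ext_in. intros r Hr. apply Dec, InT, Hr. }
  destruct (le_additive G X _ _ Lqg) as [_ Eqg].
  assert (Z := list_sum_map_eq0 _ T (fun r => wordlen (inv (u r) *g v r)) ltac:(lia)).
  intros r Hr. destruct (in_dec Req_EM_T r T) as [I|I].
  - symmetry. apply divg_eq1, (wordlen_eq0 G X); [apply Dec|apply Z]; auto.
  - assert (Hv : v r = one) by (apply NNPP; intro E; now apply I, (frame_support v t)).
    rewrite Hv. apply NNPP. intro E. now apply (Supp r).
Qed.

Lemma top_maximal (A : FSpt) p : proj1_sig A p -> fst p = g -> maximalFS A.
Proof.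
  intros Hp Ep B [p' [q [Hp' [Hq Hsub]]]].
  pose proof (class_inF A p Hp) as Ip. pose proof (class_inF A p' Hp') as Ip'.
  pose proof (class_inF B q Hq) as Iq.
  pose proof (equivF_top p p' Ip Ip' Ep (class_equivF A p p' Hp Hp')) as Ep'.
  pose proof Ip' as [_ [_ Wu]]. rewrite Ep' in Wu. pose proof Iq as [_ [Lqg Wv]].
  pose proof (wfact_top_refinement_eq _ _ _ Wu Wv Lqg Hsub) as EqA.
  assert (Eqv : equivF p' q).
  { split; [intros r Hr; symmetry; apply EqA; lra|].
    rewrite (EqA 0), (EqA 1) by lra. reflexivity. }
  apply (class_eq B A q); auto. eapply class_add; eauto.
Qed.

Lemma flip_inDelta n y : inDelta n y -> inDelta n (flip n y).
Proof.
  intros [H1 H2]. unfold flip. split.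
  - intros j Hj. assert (0 <= y (S n - j)%nat <= 1) by (apply H1; lia). lra.
  - intros j Hj. replace (S n - j)%nat with (S (S n - S j)) by lia.
    assert (y (S n - S j)%nat <= y (S (S n - S j))) by (apply H2; lia). lra.
Qed.

Lemma flip_flip n z j : (1 <= j <= n)%nat -> flip n (flip n z) j = z j.
Proof. intro H. unfold flip. replace (S n - (S n - j))%nat with j by lia. ring. Qed.

Lemma Phi_ext w y y' : (forall j, (1 <= j <= length w)%nat -> y j = y' j) ->
  Phi G w y = Phi G w y'.
Proof.
  intro H. apply functional_extensionality. intro r. unfold Phi. do 2 f_equal.
  apply filter_ext_in. intros j Hj. apply in_seq in Hj. now rewrite H by lia.
Qed.

Lemma cellopen_flip n (P Q : (nat -> R) -> Prop) : cellopen n Q ->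
  (forall y, inDelta n y -> (P y <-> Q (flip n y))) -> cellopen n P.
Proof.
  intros HQ E y Hy Py.
  destruct (HQ (flip n y) (flip_inDelta n y Hy) (proj1 (E y Hy) Py)) as [eps [Heps Hz]].
  exists eps. split; auto. intros z Hz' Hclose. apply (E z Hz'), Hz; [now apply flip_inDelta|].
  intros j Hj. unfold flip.
  replace (1 - z (S n - j)%nat - (1 - y (S n - j)%nat))
    with (- (z (S n - j)%nat - y (S n - j)%nat)) by ring.
  rewrite Rabs_Ropp. apply Hclose. lia.
Qed.

Lemma wfact_Phi w z : reduced g w -> inDelta (length w) z -> wfact G X g (Phi G w z).
Proof.
  intros Red HD. rewrite Phi_place. apply wfact_mset_of.
  - now rewrite place_fst.
  - now apply place_sorted.
  - now apply place_range.
Qed.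

Definition cell n c y := ell g n /\ maxchain n c /\ inDelta n y.

Definition cell_point n c y := Phi G (chain_word n c) (flip n y).

Lemma inF_cell_point n c y : cell n c y -> inF (g, cell_point n c y).
Proof.
  intros [Eg [Mc HD]]. assert (Mg : Mon g) by (eapply ell_Mon; eauto).
  split; [now apply le_one_l|split; [now apply le_refl|]].
  apply wfact_Phi; [now apply maxchain_reduced|]. rewrite chain_word_length. now apply flip_inDelta.
Qed.

Lemma Dsc_eq_iff_equivF n c y n' c' y' : cell n c y -> cell n' c' y' ->
  (Dsc G n c y = Dsc G n' c' y' <-> equivF (g, cell_point n c y) (g, cell_point n' c' y')).
Proof.
  intros C C'. pose proof C as [Eg [Mc HD]]. pose proof C' as [Eg' [Mc' HD']].
  pose proof (Dsc_descriptor n c y HD (maxchain_inj n c Eg Mc)) as D.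
  pose proof (Dsc_descriptor n' c' y' HD' (maxchain_inj n' c' Eg' Mc')) as D'.
  split.
  - intro E. apply equivF_of_interior; auto using inF_cell_point.
    intros r Hr. simpl. unfold cell_point. now rewrite <- !decode_Dsc, E.
  - intros [E _]. destruct (decode_inj G 1 _ _ _ _ D D') as [A B].
    + intros r Hr. rewrite !decode_Dsc by auto. apply E, Hr.
    + rewrite (surjective_pairing (Dsc G n c y)), (surjective_pairing (Dsc G n' c' y')).
      congruence.
Qed.

Lemma word_cell w z : reduced g w -> inDelta (length w) z ->
  cell (length w) (word_chain w) (flip (length w) z) /\
  cell_point (length w) (word_chain w) (flip (length w) z) = Phi G w z.
Proof.
  intros Red HD. split.
  - split; [apply Red|]. split; [now apply word_chain_maxchain|now apply flip_inDelta].
  - unfold cell_point. rewrite chain_word_word_chain by auto.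
    apply Phi_ext. intros j Hj. now apply flip_flip.
Qed.

Lemma wfact_cell u : wfact G X g u ->
  exists n c y, cell n c y /\ forall r, 0 < r < 1 -> cell_point n c y r = u r.
Proof.
  intro W. destruct (wfact_eq_mset_of u W) as [P [Red [SS [F E]]]].
  destruct (place_unplace P SS F) as [EP HD].
  destruct (word_cell _ _ Red HD) as [C U].
  do 3 eexists. split; [exact C|]. intros r Hr. rewrite U, Phi_place, EP. now apply E.
Qed.

Local Notation MaxPt := (@MaxPt G X g).
Local Notation Kpt := (@Kpt G X g).

Lemma sig_eq {A : Type} {P : A -> Prop} (a b : sig P) : proj1_sig a = proj1_sig b -> a = b.
Proof. destruct a as [x Hx], b as [y Hy]; simpl. intros ->. f_equal. apply proof_irrelevance. Qed.

Definition represents (a : MaxPt) (d : Kpt) : Prop :=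
  exists n c y, cell n c y /\ Dsc G n c y = proj1_sig d /\
    proj1_sig (proj1_sig a) (g, cell_point n c y).

Lemma represents_exists_K (a : MaxPt) : exists d, represents a d.
Proof.
  destruct a as [A Hmax]. pose proof (proj2_sig A) as [p [Ip EA]].
  assert (Hp : proj1_sig A p) by (rewrite EA; split; auto; apply equivF_refl).
  pose proof (maximal_top A p Hmax Hp) as Ep. pose proof Ip as [_ [_ W]]. rewrite Ep in W.
  destruct (wfact_cell _ W) as [n [c [y [C E]]]]. pose proof C as [Eg [Mc HD]].
  exists (exist _ (Dsc G n c y) (ex_intro _ n (ex_intro _ c (ex_intro _ y
    (conj Eg (conj Mc (conj HD eq_refl))))))).
  exists n, c, y. do 2 (split; auto). simpl.
  apply class_add with p; auto using inF_cell_point.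
  apply equivF_of_interior; auto using inF_cell_point. intros r Hr. symmetry. now apply E.
Qed.

Lemma represents_exists_Max (d : Kpt) : exists a, represents a d.
Proof.
  destruct d as [d0 [n [c [y [Eg [Mc [HD Ed]]]]]]].
  assert (C : cell n c y) by (split; auto).
  set (A := mkclass _ (inF_cell_point n c y C)).
  exists (exist _ A (top_maximal A _ (mkclass_mem _ _) eq_refl)).
  exists n, c, y. do 2 (split; auto). apply mkclass_mem.
Qed.

Lemma represents_cell a d n c y : represents a d -> cell n c y ->
  (Dsc G n c y = proj1_sig d <-> proj1_sig (proj1_sig a) (g, cell_point n c y)).
Proof.
  intros [n' [c' [y' [C' [Ed Ha]]]]] C. rewrite <- Ed, Dsc_eq_iff_equivF by auto. split.
  - intro E. apply (class_add _ _ _ Ha); auto using inF_cell_point. now apply equivF_sym.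
  - intro H. now apply (class_equivF _ _ _ H).
Qed.

Lemma represents_functional a d d' : represents a d -> represents a d' -> d = d'.
Proof.
  intros R [n [c [y [C [Ed Ha]]]]]. apply sig_eq. rewrite <- Ed.
  symmetry. now apply (represents_cell a d n c y R C).
Qed.

Lemma represents_injective a a' d : represents a d -> represents a' d -> a = a'.
Proof.
  intros [n [c [y [C [Ed Ha]]]]] R'. apply sig_eq.
  apply (class_eq _ _ _ Ha). now apply (represents_cell a' d n c y R' C).
Qed.

Definition to_K (a : MaxPt) : Kpt :=
  proj1_sig (constructive_indefinite_description _ (represents_exists_K a)).

Lemma to_K_represents a : represents a (to_K a).
Proof. apply (proj2_sig (constructive_indefinite_description _ _)). Qed.

Lemma to_K_bijective : exists f' : Kpt -> MaxPt,
  (forall a, f' (to_K a) = a) /\ (forall d, to_K (f' d) = d).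
Proof.
  exists (fun d => proj1_sig (constructive_indefinite_description _ (represents_exists_Max d))).
  split.
  - intro a. destruct (constructive_indefinite_description _ _) as [a' Ha']. simpl.
    eapply represents_injective; eauto using to_K_represents.
  - intro d. destruct (constructive_indefinite_description _ _) as [a' Ha']. simpl.
    eapply represents_functional; eauto using to_K_represents.
Qed.

Lemma to_K_cell a n c y : cell n c y ->
  (proj1_sig (to_K a) = Dsc G n c y <-> proj1_sig (proj1_sig a) (g, cell_point n c y)).
Proof.
  intro C. rewrite <- (represents_cell a _ n c y (to_K_represents a) C). split; auto.
Qed.

Lemma to_K_continuous V : Kopen V -> MaxOpen (fun a => V (to_K a)).
Proof.
  intro HV. exists (fun A => exists H : maximalFS A, V (to_K (exist _ A H))). split.
  - intros h w L1 L2 Red. destruct (classic (h = g)) as [->|Hne].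
    2: { intros y _ [A [[Hmax _] Hin]]. exfalso. exact (Hne (maximal_top A _ Hmax Hin)). }
    apply (cellopen_flip _ _ _ (HV _ _ (proj2 (proj2 Red)) (word_chain_maxchain w Red))).
    intros y Hy. destruct (word_cell w y Red Hy) as [C U]. rewrite <- U. split.
    + intros [A' [[H HV'] Hin']]. exists (to_K (exist _ A' H)). split; auto.
      now apply to_K_cell.
    + intros [d [Vd Ed]].
      set (A' := mkclass _ (inF_cell_point _ _ _ C)).
      set (a := exist _ A' (top_maximal A' _ (mkclass_mem _ _) eq_refl) : MaxPt).
      exists A'. split; [|apply mkclass_mem]. exists (proj2_sig a).
      replace (to_K _) with d; auto. apply sig_eq. rewrite Ed. symmetry.
      apply (to_K_cell a), mkclass_mem; auto.
  - intros a. split.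
    + intros Va. exists (proj2_sig a). now destruct a.
    + intros [H Va]. now replace a with (exist (fun A => maximalFS A) (proj1_sig a) H)
        by now apply sig_eq.
Qed.

Lemma to_K_open U : MaxOpen U -> Kopen (fun d => exists a, U a /\ to_K a = d).
Proof.
  intros [V [HV EU]] n c Eg Mc.
  assert (Mg : Mon g) by (eapply ell_Mon; eauto).
  pose proof (HV g _ (le_one_l _ _ _ Mg) (le_refl _ _ _ Mg) (maxchain_reduced n c Eg Mc)) as CP.
  rewrite chain_word_length in CP. apply (cellopen_flip n _ _ CP). intros y Hy.
  assert (C : cell n c y) by (split; auto). fold (cell_point n c y). split.
  - intros [d [[a [Ua <-]] Ed]]. exists (proj1_sig a). split; [now apply EU|].
    now apply to_K_cell.
  - intros [A [VA Hin]].
    set (a := exist (fun A => maximalFS A) A (top_maximal A _ Hin eq_refl) : MaxPt).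
    exists (to_K a). split; [exists a; split; auto; now apply EU|].
    now apply (to_K_cell a).
Qed.

End IntervalComplex.

Theorem theorem5p13 (G : Group) (X : G -> Prop) (g : G)
  (hconj : @conj_closed G X) (hgen : @generates G X) (hg : @Mon G X g) :
  homeomorphic (@MaxOpen G X g) (@Kopen G X g).
Proof.
  exists (to_K G X g). split; [apply to_K_bijective|]. split.
  - apply to_K_continuous.
  - apply to_K_open.
Qed.
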